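(* Let $\mathbf{m}_0=(x_0,y_0),\mathbf{m}_1=(x_1,y_1),\mathbf{m}_2=(x_2,y_2)\in\mathbb{R}^2$ be non-collinear and let $\tilde{E}$ be the bifurcation curve, i.e. the degree-5 plane algebraic curve with Cartesian equation $F(\mathbf{x})=0$. Then $\tilde{E}$ has three real ideal points $[x_1-x_2:y_1-y_2:0]$, $[x_2-x_0:y_2-y_0:0]$, $[x_0-x_1:y_0-y_1:0]$ and two complex ideal points $[1:i:0]$, $[1:-i:0]$. The three real asymptotic lines of $\tilde{E}$ have Cartesian equations \[ L_0:\ 4\ast(\mathbf{d}_{12}\wedge\mathbf{d}_0(\mathbf{x}))-3W=0,\quad L_1:\ 4\ast(\mathbf{d}_{20}\wedge\mathbf{d}_1(\mathbf{x}))-3W=0,\quad L_2:\ 4\ast(\mathbf{d}_{01}\wedge\mathbf{d}_2(\mathbf{x}))-3W=0. \] Finally, $L_0\cap L_1\cap L_2=\emptyset$.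
   Context: Notation: for $\mathbf{u}=(u_1,u_2),\mathbf{v}=(v_1,v_2)\in\mathbb{R}^2$, $\ast(\mathbf{u}\wedge\mathbf{v})=u_1v_2-u_2v_1$. $\mathbf{d}_i(\mathbf{x})=\mathbf{x}-\mathbf{m}_i$, $\mathbf{d}_{ji}=\mathbf{m}_j-\mathbf{m}_i$, $d_i(\mathbf{x})=\Vert\mathbf{d}_i(\mathbf{x})\Vert$, $d_{ji}=\Vert\mathbf{d}_{ji}\Vert$, $W=\ast(\mathbf{d}_{10}\wedge\mathbf{d}_{20})$. Bifurcation curve: with TDOA map $\boldsymbol{\tau}_2(\mathbf{x})=(d_1(\mathbf{x})-d_0(\mathbf{x}),d_2(\mathbf{x})-d_0(\mathbf{x}))$ and ellipse $E:\Vert\tau_2\mathbf{d}_{10}-\tau_1\mathbf{d}_{20}\Vert^2-W^2=0$, $\tilde{E}=\boldsymbol{\tau}_2^{-1}(E)$, whose Cartesian equation is $F(\mathbf{x})=0$ with $F=Q^4-8Q^2(P_{01}^2+P_{12}^2+P_{20}^2)+64QP_{01}P_{12}P_{20}+16(P_{01}^4+P_{12}^4+P_{20}^4)-32(P_{01}^2P_{12}^2+P_{12}^2P_{20}^2+P_{20}^2P_{01}^2)$, a polynomial of degree 5 in $(x,y)$, where $\mathbf{D}_0(\mathbf{x})=d_0(\mathbf{x})\mathbf{d}_{12}$, $\mathbf{D}_1(\mathbf{x})=d_1(\mathbf{x})\mathbf{d}_{20}$, $\mathbf{D}_2(\mathbf{x})=d_2(\mathbf{x})\mathbf{d}_{01}$,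 $Q(\mathbf{x})=\sum_i\Vert\mathbf{D}_i(\mathbf{x})\Vert^2-W^2$, $P_{ij}(\mathbf{x})=\mathbf{D}_i(\mathbf{x})\cdot\mathbf{D}_j(\mathbf{x})$. Projective conventions: embed the affine plane into $\mathbb{P}^2$ via $x=X/U$, $y=Y/U$, with ideal line $U=0$; the ideal points of a curve are its intersections with the ideal line (over $\mathbb{C}$); an asymptotic line is an affine line tangent to the curve at one of its smooth ideal points. *)

From Stdlib Require Import Rdefinitions.
From HB Require Import structures.
From mathcomp Require Import all_boot all_order all_algebra.
From mathcomp Require Import Rstruct.
From mathcomp Require Import mpoly complex.

Set Implicit Arguments.
Unset Strict Implicit.
Unset Printing Implicit Defensive.

Import Order.TTheory GRing.Theory Num.Theory.
Local Open Scope ring_scope.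

Notation RR := (R : rcfType).

(* 2D cross product  *(u /\ v) = u1 v2 - u2 v1  and dot product. *)
Definition cross (u v : RR * RR) : RR := u.1 * v.2 - u.2 * v.1.
Definition dot (u v : RR * RR) : RR := u.1 * v.1 + u.2 * v.2.
Definition vsub (u v : RR * RR) : RR * RR := (u.1 - v.1, u.2 - v.2).

Section Bifurcation.
Variables (m0 m1 m2 : RR * RR).

Definition d12 := vsub m1 m2.
Definition d20 := vsub m2 m0.
Definition d01 := vsub m0 m1.
Definition d10 := vsub m1 m0.
Definition Wc : RR := cross d10 d20.

Definition Xp : {mpoly RR[2]} := 'X_0.
Definition Yp : {mpoly RR[2]} := 'X_1.

Definition sqdist (m : RR * RR) : {mpoly RR[2]} :=
  (Xp - m.1%:MP) ^+ 2 + (Yp - m.2%:MP) ^+ 2.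

(* D_0 = d_0 d12, D_1 = d_1 d20, D_2 = d_2 d01.  Hence
   ||D_i||^2 = d_i^2 ||e_i||^2 and P_ij = d_i d_j (e_i . e_j),
   where e_0 = d12, e_1 = d20, e_2 = d01.  F only involves the even
   combinations P_ij^2 and P01 P12 P20, which are polynomials: *)
Definition sq0 := sqdist m0.
Definition sq1 := sqdist m1.
Definition sq2 := sqdist m2.

Definition Qp : {mpoly RR[2]} :=
  (dot d12 d12) *: sq0 + (dot d20 d20) *: sq1 + (dot d01 d01) *: sq2
  - (Wc ^+ 2)%:MP.
Definition P01sq : {mpoly RR[2]} := ((dot d12 d20) ^+ 2) *: (sq0 * sq1).
Definition P12sq : {mpoly RR[2]} := ((dot d20 d01) ^+ 2) *: (sq1 * sq2).
Definition P20sq : {mpoly RR[2]} := ((dot d01 d12) ^+ 2) *: (sq2 * sq0).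
Definition Pprod : {mpoly RR[2]} :=
  (dot d12 d20 * dot d20 d01 * dot d01 d12) *: (sq0 * sq1 * sq2).

Definition Fbif : {mpoly RR[2]} :=
  Qp ^+ 4 - 8%:R *: (Qp ^+ 2 * (P01sq + P12sq + P20sq))
  + 64%:R *: (Qp * Pprod)
  + 16%:R *: (P01sq ^+ 2 + P12sq ^+ 2 + P20sq ^+ 2)
  - 32%:R *: (P01sq * P12sq + P12sq * P20sq + P20sq * P01sq).

End Bifurcation.

Definition homogenize (K : nzRingType) (p : {mpoly K[2]}) : {mpoly K[3]} :=
  let d := (msize p).-1 in
  \sum_(m <- msupp p)
     p@_m *: ('X_0 ^+ (m (0 : 'I_2)) * 'X_1 ^+ (m (1 : 'I_2))
              * 'X_2 ^+ (d - mdeg m)).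

Definition pt3 (K : Type) (X Y U : K) : 'I_3 -> K :=
  fun i => if val i == 0%N then X else if val i == 1%N then Y else U.

Definition homogC (p : {mpoly RR[2]}) : {mpoly RR[i][3]} :=
  map_mpoly (real_complex RR) (homogenize p).

Definition ideal_point (p : {mpoly RR[2]}) (X Y : RR[i]) : Prop :=
  (X, Y) <> (0, 0) /\ (homogC p).@[pt3 X Y 0] = 0.

(* [X : Y : 0] equals [a : b : 0] in P^2 (both nonzero). *)
Definition same_dir (X Y a b : RR[i]) : Prop := X * b - Y * a = 0.

Definition gradh (p : {mpoly RR[2]}) (X Y U : RR) : RR * RR * RR :=
  (((homogenize p)^`M(0 : 'I_3)).@[pt3 X Y U],
   ((homogenize p)^`M(1 : 'I_3)).@[pt3 X Y U],
   ((homogenize p)^`M(2 : 'I_3)).@[pt3 X Y U]).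

(* The real ideal point [a : b : 0] of the curve p = 0 is a smooth point
   of its projective closure, the tangent line there,
   g1 X + g2 Y + g3 U = 0 with (g1,g2,g3) the gradient, is an affine line
   (i.e. not the ideal line U = 0), and its affine part is exactly the
   line {x | L x = 0}. *)
Definition asymptote_at (p : {mpoly RR[2]}) (a b : RR)
    (L : RR * RR -> RR) : Prop :=
  let g := gradh p a b 0 in
  [/\ g <> (0, 0, 0), (g.1.1, g.1.2) <> (0, 0) &
   forall x : RR * RR, (g.1.1 * x.1 + g.1.2 * x.2 + g.2 = 0) <-> (L x = 0)].

Definition Lline (m0 m1 m2 : RR * RR) (i : nat) (x : RR * RR) : RR :=
  let W := Wc m0 m1 m2 in
  match i with
  | 0%N => 4%:R * cross (d12 m1 m2) (vsub x m0) - 3%:R * W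
  | 1%N => 4%:R * cross (d20 m0 m2) (vsub x m1) - 3%:R * W
  | _ => 4%:R * cross (d01 m0 m1) (vsub x m2) - 3%:R * W
  end.

From Stdlib Require Import Rdefinitions.
From HB Require Import structures.
From mathcomp Require Import all_boot all_order all_algebra.
From mathcomp Require Import Rstruct.
From mathcomp Require Import mpoly complex.
From mathcomp Require Import ring.
Import Order.TTheory GRing.Theory Num.Theory.
Local Open Scope ring_scope.
Local Open Scope complex_scope.

(* Put m0 at the origin and write m1 - m0 = (a1, a2), m2 - m0 = (b1, b2).  The projective
   closure of F is then an explicit quintic form in (X - x0 U, Y - y0 U, U) whose coefficients
   are polynomials in a1, a2, b1, b2 (the degree drops from 8 to 5 through cancellations);
   that it dehomogenizes to F is a polynomial identity checked by [ring].  On the ideal line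
   U = 0 the form factors as
     -64 W |d12|^2 |d20|^2 |d01|^2 (X^2 + Y^2) *(d12 /\ (X,Y)) *(d20 /\ (X,Y)) *(d01 /\ (X,Y)),
   which gives the five ideal points.  At the ideal point in the direction of d12 the gradient
   of the form is a nonzero multiple of the coefficient vector of L0; since F and the lines
   are invariant under the cyclic permutation of (m0, m1, m2), the same holds for L1 and L2.
   Finally L0 + L1 + L2 = -W is a nonzero constant, so the three lines have no common point. *)

Local Notation ix := (0 : 'I_2)%R (only parsing).
Local Notation iy := (1 : 'I_2)%R (only parsing).
Local Notation iX := (0 : 'I_3)%R (only parsing).
Local Notation iY := (1 : 'I_3)%R (only parsing).
Local Notation iU := (2 : 'I_3)%R (only parsing).

Lemma ord2P (P : 'I_2 -> Prop) : P 0 -> P 1 -> forall i, P i.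
Proof.
move=> P0 P1 [[|[|i]] Hi] //.
- by have -> : Ordinal Hi = 0 by apply/val_inj.
- by have -> : Ordinal Hi = 1 by apply/val_inj.
Qed.

Lemma ord3P (P : 'I_3 -> Prop) : P 0 -> P 1 -> P 2 -> forall i, P i.
Proof.
move=> P0 P1 P2 [[|[|[|i]]] Hi] //.
- by have -> : Ordinal Hi = 0 by apply/val_inj.
- by have -> : Ordinal Hi = 1 by apply/val_inj.
- by have -> : Ordinal Hi = 2 by apply/val_inj.
Qed.

Lemma mdeg2 (m : 'X_{1..2}) : mdeg m = (m ix + m iy)%N.
Proof.
rewrite mdegE !big_ord_recr big_ord0 /= add0n.
by congr (_ + _)%N; congr (m _); apply/val_inj.
Qed.

Lemma mdeg3 (m : 'X_{1..3}) : mdeg m = (m iX + m iY + m iU)%N.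
Proof.
rewrite mdegE !big_ord_recr big_ord0 /= add0n.
by congr (_ + _ + _)%N; congr (m _); apply/val_inj.
Qed.

Definition hom_mnm (m : 'X_{1..2}) (k : nat) : 'X_{1..3} :=
  (U_(iX) *+ m ix + U_(iY) *+ m iy + U_(iU) *+ k)%MM.
Definition dehom_mnm (m : 'X_{1..3}) : 'X_{1..2} :=
  (U_(ix) *+ m iX + U_(iy) *+ m iY)%MM.

Lemma hom_mnmE m k :
  [/\ hom_mnm m k iX = m ix, hom_mnm m k iY = m iy & hom_mnm m k iU = k].
Proof. by rewrite /hom_mnm !mnmDE !mulmnE !mnm1E /= !mul1n !mul0n ?addn0. Qed.

Lemma dehom_mnmE m : dehom_mnm m ix = m iX /\ dehom_mnm m iy = m iY.
Proof. by rewrite /dehom_mnm !mnmDE !mulmnE !mnm1E /= !mul1n !mul0n ?addn0. Qed.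

Lemma dehom_hom_mnm m k : dehom_mnm (hom_mnm m k) = m.
Proof.
have [d0 d1] := dehom_mnmE (hom_mnm m k); have [h0 h1 _] := hom_mnmE m k.
by apply/mnmP; apply: ord2P; [rewrite d0 h0 | rewrite d1 h1].
Qed.

Lemma hom_dehom_mnm (m : 'X_{1..3}) : hom_mnm (dehom_mnm m) (m iU) = m.
Proof.
have [d0 d1] := dehom_mnmE m; have [h0 h1 h2] := hom_mnmE (dehom_mnm m) (m iU).
by apply/mnmP; apply: ord3P; rewrite ?h0 ?h1 ?h2 ?d0 ?d1.
Qed.

Lemma mdeg_hom_mnm m k : mdeg (hom_mnm m k) = (mdeg m + k)%N.
Proof. by rewrite mdeg3 mdeg2; have [-> -> ->] := hom_mnmE m k. Qed.

Lemma mdeg_dehom_mnm (m : 'X_{1..3}) : (mdeg (dehom_mnm m) + m iU)%N = mdeg m.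
Proof. by rewrite mdeg3 mdeg2; have [-> ->] := dehom_mnmE m. Qed.

Section Homogenize.
Variable K : comNzRingType.

Definition dehom_tuple : 3.-tuple {mpoly K[2]} := [tuple 'X_ix; 'X_iy; 1].

Lemma mcoeff_sum_msupp n (p : {mpoly K[n]}) m :
  \sum_(m' <- msupp p) p@_m' * (m' == m)%:R = p@_m.
Proof.
rewrite [in RHS](mpolyE p) raddf_sum /=; apply: eq_bigr => m' _.
by rewrite mcoeffZ mcoeffX.
Qed.

Lemma mcoeff_dehom (G : {mpoly K[3]}) m :
  (G \mPo dehom_tuple)@_m = \sum_(nu <- msupp G) G@_nu * (dehom_mnm nu == m)%:R.
Proof.
rewrite comp_mpolyE raddf_sum /=; apply: eq_bigr => nu _; rewrite mcoeffZ.
suff -> : \prod_(i < 3) tnth dehom_tuple i ^+ nu i = 'X_[dehom_mnm nu].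
  by rewrite mcoeffX.
rewrite !big_ord_recr big_ord0 /= mul1r /dehom_mnm mpolyXD -!mpolyXn.
rewrite [tnth _ ord_max]/= expr1n mulr1.
by congr (_ ^+ _ * _ ^+ _); congr (nu _); apply/val_inj.
Qed.

Lemma mpolyX_hom_mnm (m : 'X_{1..2}) k :
  'X_iX ^+ m ix * 'X_iY ^+ m iy * 'X_iU ^+ k = 'X_[hom_mnm m k] :> {mpoly K[3]}.
Proof. by rewrite /hom_mnm !mpolyXD -!mpolyXn. Qed.

Lemma meval_ideal (G : {mpoly K[3]}) (X Y : K) :
  G.@[pt3 X Y 0] = \sum_(nu <- msupp G) G@_nu * (X ^+ nu iX * Y ^+ nu iY * 0 ^+ nu iU).
Proof.
rewrite mevalE; apply: eq_bigr => nu _; congr (_ * _).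
rewrite !big_ord_recr big_ord0 /= mul1r.
by congr (_ ^+ _ * _ ^+ _ * _ ^+ _); congr (nu _); apply/val_inj.
Qed.

Section HomogeneousForm.
Variables (G : {mpoly K[3]}) (n : nat).
Hypothesis homG : G \is n.-homog.

Lemma mcoeff_dehom_homog m : (G \mPo dehom_tuple)@_m =
  if (mdeg m <= n)%N then G@_(hom_mnm m (n - mdeg m)) else 0.
Proof.
have degG : {in msupp G, forall nu, mdeg nu = n} := dhomog_mf homG.
rewrite mcoeff_dehom; case: ifP => le_mn.
- rewrite -mcoeff_sum_msupp; apply: eq_big_seq => nu Gnu.
  congr (_ * (nat_of_bool _)%:R); apply/eqP/eqP => [<-|->].
    by rewrite -(degG nu Gnu) -mdeg_dehom_mnm addKn hom_dehom_mnm.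
  by rewrite dehom_hom_mnm.
- rewrite big1_seq // => nu /andP[_ Gnu]; case: eqP => [E|]; last by rewrite mulr0.
  by move: le_mn; rewrite -E -(degG nu Gnu) -mdeg_dehom_mnm leq_addr.
Qed.

Lemma mdeg_dehom_homog m : m \in msupp (G \mPo dehom_tuple) -> (mdeg m <= n)%N.
Proof. by rewrite mcoeff_msupp mcoeff_dehom_homog; case: ifP; rewrite ?eqxx. Qed.

(* A monomial of [G] without [U] survives dehomogenization with full degree [n]. *)
Lemma msize_dehom_homog (X Y : K) :
  G.@[pt3 X Y 0] != 0 -> msize (G \mPo dehom_tuple) = n.+1.
Proof.
move=> G_ideal; apply/eqP; rewrite eqn_leq; apply/andP; split.
  by rewrite msizeE; apply/bigmax_leqP_seq => m /mdeg_dehom_homog.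
have [/hasP[nu Gnu /eqP nu2]|/hasPn noU] :=
  boolP (has (fun nu : 'X_{1..3} => nu iU == 0%N) (msupp G)).
  have deg_nu : mdeg (dehom_mnm nu) = n.
    have degG : {in msupp G, forall nu, mdeg nu = n} := dhomog_mf homG.
    by rewrite -(degG nu Gnu) -mdeg_dehom_mnm nu2 addn0.
  suff /msize_mdeg_lt : dehom_mnm nu \in msupp (G \mPo dehom_tuple) by rewrite deg_nu.
  have hom_nu : hom_mnm (dehom_mnm nu) 0 = nu.
    by rewrite -[X in hom_mnm _ X]nu2 hom_dehom_mnm.
  by rewrite mcoeff_msupp mcoeff_dehom_homog deg_nu leqnn subnn hom_nu -mcoeff_msupp.
move: G_ideal; rewrite meval_ideal big1_seq ?eqxx // => nu /andP[_ Gnu].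
by move: (noU nu Gnu); case: (nu iU) => // k _; rewrite expr0n /= !mulr0.
Qed.

Lemma homogenize_eq (X Y : K) :
  G.@[pt3 X Y 0] != 0 -> homogenize (G \mPo dehom_tuple) = G.
Proof.
move=> G_ideal; apply/mpolyP => mu.
rewrite /homogenize (msize_dehom_homog _ _ G_ideal) /= raddf_sum /=.
under eq_bigr do rewrite mcoeffZ mpolyX_hom_mnm mcoeffX.
have [deg_mu|deg_mu] := eqVneq (mdeg mu) n; last first.
  rewrite (dhomog_nemf_coeff homG) // big1_seq // => m /andP[_ pm].
  case: eqP => [E|]; last by rewrite mulr0.
  by move: deg_mu; rewrite -E mdeg_hom_mnm subnKC ?eqxx ?mdeg_dehom_homog.
have mu_le : (mdeg (dehom_mnm mu) <= n)%N by rewrite -deg_mu -mdeg_dehom_mnm leq_addr.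
have mu2 : (n - mdeg (dehom_mnm mu))%N = mu iU by rewrite -deg_mu -mdeg_dehom_mnm addKn.
transitivity (G \mPo dehom_tuple)@_(dehom_mnm mu).
  rewrite -mcoeff_sum_msupp; apply: eq_big_seq => m _.
  congr (_ * (nat_of_bool _)%:R); apply/eqP/eqP => [<-|->].
    by rewrite dehom_hom_mnm.
  by rewrite mu2 hom_dehom_mnm.
by rewrite mcoeff_dehom_homog mu_le mu2 hom_dehom_mnm.
Qed.

End HomogeneousForm.

End Homogenize.

Lemma mpolyX_homog n (T : nzRingType) (i : 'I_n) : ('X_i : {mpoly T[n]}) \is 1.-homog.
Proof. by apply/dhomogP => m; rewrite msuppX inE => /eqP ->; apply: mdeg1. Qed.

Lemma mderiv_mpolyX n (T : comNzRingType) (i j : 'I_n) :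
  ('X_j : {mpoly T[n]})^`M(i) = ((j == i)%:R)%:MP.
Proof.
rewrite mderivX mnm1E; case: eqP => [->|_]; last by rewrite scale0r.
have -> : (U_(i) - U_(i))%MM = 0%MM by apply/mnmP => k; rewrite mnmBE subnn mnm0E.
by rewrite mpolyX0 scale1r.
Qed.

Lemma mderiv_exp n (T : comNzRingType) (p : {mpoly T[n]}) k i :
  (p ^+ k)^`M(i) = k%:R * p ^+ k.-1 * p^`M(i).
Proof.
elim: k => [|k IH]; first by rewrite expr0 -mpolyC1 mderivC !mul0r.
rewrite exprS mderivM IH; case: k {IH} => [|k] /=.
  by rewrite expr0 !mulr1 mul0r mulr0 addr0 mul1r.
by rewrite !exprS; ring.
Qed.


(* [cijk a1 a2 b1 b2] is the coefficient of [u^i v^j t^k] in the homogenization of [F],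
   with [u = X - x0 U], [v = Y - y0 U], [t = U], [m1 - m0 = (a1, a2)], [m2 - m0 = (b1, b2)].
   The coefficients were computed by computer algebra; [bif_translated_quintic] certifies
   them. *)
Definition c500 {K : comNzRingType} (a1 a2 b1 b2 : K) : K :=
  (- 64 * a2^+4 * b1 * b2^+6 - 128 * a2^+4 * b1^+3 * b2^+4 - 64 * a2^+4 * b1^+5 * b2^+2 + 192 * a2^+5 * b1 * b2^+5 + 256 * a2^+5 * b1^+3 * b2^+3 + 64 * a2^+5 * b1^+5 * b2 - 192 * a2^+6 * b1 * b2^+4 - 192 * a2^+6 * b1^+3 * b2^+2 + 64 * a2^+7 * b1 * b2^+3 + 64 * a2^+7 * b1^+3 * b2 + 64 * a1 * a2^+3 * b2^+7 + 128 * a1 * a2^+3 * b1^+2 * b2^+5 + 64 * a1 * a2^+3 * b1^+4 * b2^+3 - 192 * a1 * a2^+4 * b2^+6 - 128 * a1 * a2^+4 * b1^+2 * b2^+4 + 64 * a1 * a2^+4 * b1^+4 * b2^+2 + 192 * a1 * a2^+5 * b2^+5 + 64 * a1 * a2^+5 * b1^+2 * b2^+3 - 128 * a1 * a2^+5 * b1^+4 * b2 - 64 * a1 * a2^+6 * b2^+4 - 64 * a1 * a2^+6 * b1^+2 * b2^+2 - 64 * a1^+2 * a2^+2 * b1 * b2^+6 - 128 * a1^+2 * a2^+2 * b1^+3 * b2^+4 - 64 * a1^+2 * a2^+2 * b1^+5 * b2^+2 + 64 * a1^+2 * a2^+3 * b1 * b2^+5 + 128 * a1^+2 * a2^+3 *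 b1^+3 * b2^+3 + 64 * a1^+2 * a2^+3 * b1^+5 * b2 - 128 * a1^+2 * a2^+4 * b1 * b2^+4 - 128 * a1^+2 * a2^+4 * b1^+3 * b2^+2 + 128 * a1^+2 * a2^+5 * b1 * b2^+3 + 128 * a1^+2 * a2^+5 * b1^+3 * b2 + 64 * a1^+3 * a2 * b2^+7 + 128 * a1^+3 * a2 * b1^+2 * b2^+5 + 64 * a1^+3 * a2 * b1^+4 * b2^+3 - 192 * a1^+3 * a2^+2 * b2^+6 - 128 * a1^+3 * a2^+2 * b1^+2 * b2^+4 + 64 * a1^+3 * a2^+2 * b1^+4 * b2^+2 + 256 * a1^+3 * a2^+3 * b2^+5 + 128 * a1^+3 * a2^+3 * b1^+2 * b2^+3 - 128 * a1^+3 * a2^+3 * b1^+4 * b2 - 128 * a1^+3 * a2^+4 * b2^+4 - 128 * a1^+3 * a2^+4 * b1^+2 * b2^+2 - 128 * a1^+4 * a2 * b1 * b2^+5 - 128 * a1^+4 * a2 * b1^+3 * b2^+3 + 64 * a1^+4 * a2^+2 * b1 * b2^+4 + 64 * a1^+4 * a2^+2 * b1^+3 * b2^+2 + 64 * a1^+4 * a2^+3 * b1 * b2^+3 + 64 * a1^+4 * a2^+3 * b1^+3 * b2 + 64 * a1^+5 * a2 * b2^+5 + 64 * a1^+5 * a2 * b1^+2 * b2^+3 - 64 * a1^+5 * a2^+2 * b2^+4 - 64 * a1^+5 * a2^+2 * b1^+2 * b2^+2).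

Definition c410 {K : comNzRingType} (a1 a2 b1 b2 : K) : K :=
  (128 * a2^+4 * b1^+2 * b2^+5 + 256 * a2^+4 * b1^+4 * b2^+3 + 128 * a2^+4 * b1^+6 * b2 - 320 * a2^+5 * b1^+2 * b2^+4 - 384 * a2^+5 * b1^+4 * b2^+2 - 64 * a2^+5 * b1^+6 + 256 * a2^+6 * b1^+2 * b2^+3 + 256 * a2^+6 * b1^+4 * b2 - 64 * a2^+7 * b1^+2 * b2^+2 - 64 * a2^+7 * b1^+4 - 64 * a1 * a2^+3 * b1 * b2^+6 - 128 * a1 * a2^+3 * b1^+3 * b2^+4 - 64 * a1 * a2^+3 * b1^+5 * b2^+2 + 64 * a1 * a2^+4 * b1 * b2^+5 - 256 * a1 * a2^+4 * b1^+3 * b2^+3 - 320 * a1 * a2^+4 * b1^+5 * b2 + 64 * a1 * a2^+5 * b1 * b2^+4 + 192 * a1 * a2^+5 * b1^+3 * b2^+2 + 128 * a1 * a2^+5 * b1^+5 - 64 * a1 * a2^+6 * b1 * b2^+3 - 64 * a1 * a2^+6 * b1^+3 * b2 - 64 * a1^+2 * a2^+2 * b2^+7 + 192 * a1^+2 * a2^+2 * b1^+4 * b2^+3 + 128 * a1^+2 * a2^+2 * b1^+6 * b2 + 256 * a1^+2 * a2^+3 * b2^+6 + 192 * a1^+2 * a2^+3 * b1^+2 * b2^+4 - 128 * a1^+2 * a2^+3 * b1^+4 * b2^+2 - 64 * a1^+2 * a2^+3 * b1^+6 - 320 * a1^+2 * a2^+4 * b2^+5 + 192 * a1^+2 * a2^+4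 * b1^+2 * b2^+3 + 512 * a1^+2 * a2^+4 * b1^+4 * b2 + 128 * a1^+2 * a2^+5 * b2^+4 - 128 * a1^+2 * a2^+5 * b1^+4 - 64 * a1^+3 * a2 * b1 * b2^+6 - 128 * a1^+3 * a2 * b1^+3 * b2^+4 - 64 * a1^+3 * a2 * b1^+5 * b2^+2 + 192 * a1^+3 * a2^+2 * b1 * b2^+5 - 128 * a1^+3 * a2^+2 * b1^+3 * b2^+3 - 320 * a1^+3 * a2^+2 * b1^+5 * b2 - 256 * a1^+3 * a2^+3 * b1 * b2^+4 - 128 * a1^+3 * a2^+3 * b1^+3 * b2^+2 + 128 * a1^+3 * a2^+3 * b1^+5 - 128 * a1^+3 * a2^+4 * b1 * b2^+3 - 128 * a1^+3 * a2^+4 * b1^+3 * b2 - 64 * a1^+4 * b2^+7 - 128 * a1^+4 * b1^+2 * b2^+5 - 64 * a1^+4 * b1^+4 * b2^+3 + 256 * a1^+4 * a2 * b2^+6 + 512 * a1^+4 * a2 * b1^+2 * b2^+4 + 256 * a1^+4 * a2 * b1^+4 * b2^+2 - 384 * a1^+4 * a2^+2 * b2^+5 - 128 * a1^+4 * a2^+2 * b1^+2 * b2^+3 + 256 * a1^+4 * a2^+2 * b1^+4 * b2 + 256 * a1^+4 * a2^+3 * b2^+4 + 192 * a1^+4 * a2^+3 * b1^+2 * b2^+2 - 64 * a1^+4 * a2^+3 * b1^+4 + 128 * a1^+5 * b1 * b2^+5 + 128 * a1^+5 * b1^+3 * b2^+3 - 320 * a1^+5 * a2 * b1 * b2^+4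 - 320 * a1^+5 * a2 * b1^+3 * b2^+2 - 64 * a1^+5 * a2^+2 * b1 * b2^+3 - 64 * a1^+5 * a2^+2 * b1^+3 * b2 - 64 * a1^+6 * b2^+5 - 64 * a1^+6 * b1^+2 * b2^+3 + 128 * a1^+6 * a2 * b2^+4 + 128 * a1^+6 * a2 * b1^+2 * b2^+2).

Definition c320 {K : comNzRingType} (a1 a2 b1 b2 : K) : K :=
  (- 64 * a2^+4 * b1 * b2^+6 - 192 * a2^+4 * b1^+3 * b2^+4 - 192 * a2^+4 * b1^+5 * b2^+2 - 64 * a2^+4 * b1^+7 + 192 * a2^+5 * b1 * b2^+5 + 384 * a2^+5 * b1^+3 * b2^+3 + 192 * a2^+5 * b1^+5 * b2 - 192 * a2^+6 * b1 * b2^+4 - 256 * a2^+6 * b1^+3 * b2^+2 - 64 * a2^+6 * b1^+5 + 64 * a2^+7 * b1 * b2^+3 + 64 * a2^+7 * b1^+3 * b2 + 64 * a1 * a2^+3 * b2^+7 + 64 * a1 * a2^+3 * b1^+2 * b2^+5 - 64 * a1 * a2^+3 * b1^+4 * b2^+3 - 64 * a1 * a2^+3 * b1^+6 * b2 - 192 * a1 * a2^+4 * b2^+6 + 128 * a1 * a2^+4 * b1^+2 * b2^+4 + 576 * a1 * a2^+4 * b1^+4 * b2^+2 + 256 * a1 * a2^+4 * b1^+6 + 192 * a1 * a2^+5 * b2^+5 - 256 * a1 * a2^+5 * b1^+2 * b2^+3 - 448 * a1 * a2^+5 * b1^+4 * b2 - 64 * a1 * a2^+6 * b2^+4 + 64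 * a1 * a2^+6 * b1^+2 * b2^+2 + 128 * a1 * a2^+6 * b1^+4 + 64 * a1^+2 * a2^+2 * b1 * b2^+6 + 64 * a1^+2 * a2^+2 * b1^+3 * b2^+4 - 64 * a1^+2 * a2^+2 * b1^+5 * b2^+2 - 64 * a1^+2 * a2^+2 * b1^+7 - 256 * a1^+2 * a2^+3 * b1 * b2^+5 + 256 * a1^+2 * a2^+3 * b1^+5 * b2 + 128 * a1^+2 * a2^+4 * b1 * b2^+4 - 256 * a1^+2 * a2^+4 * b1^+3 * b2^+2 - 384 * a1^+2 * a2^+4 * b1^+5 + 64 * a1^+2 * a2^+5 * b1 * b2^+3 + 64 * a1^+2 * a2^+5 * b1^+3 * b2 + 64 * a1^+3 * a2 * b2^+7 + 64 * a1^+3 * a2 * b1^+2 * b2^+5 - 64 * a1^+3 * a2 * b1^+4 * b2^+3 - 64 * a1^+3 * a2 * b1^+6 * b2 - 256 * a1^+3 * a2^+2 * b2^+6 - 256 * a1^+3 * a2^+2 * b1^+2 * b2^+4 + 256 * a1^+3 * a2^+2 * b1^+4 * b2^+2 + 256 * a1^+3 * a2^+2 * b1^+6 + 384 * a1^+3 * a2^+3 * b2^+5 - 384 * a1^+3 * a2^+3 * b1^+4 * b2 - 192 * a1^+3 * a2^+4 * b2^+4 + 64 * a1^+3 * a2^+4 * b1^+2 * b2^+2 + 256 * a1^+3 * a2^+4 * b1^+4 + 128 * a1^+4 * b1 * b2^+6 + 256 * a1^+4 * b1^+3 * b2^+4 + 128 * a1^+4 * b1^+5 * b2^+2 - 448 *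 a1^+4 * a2 * b1 * b2^+5 - 384 * a1^+4 * a2 * b1^+3 * b2^+3 + 64 * a1^+4 * a2 * b1^+5 * b2 + 576 * a1^+4 * a2^+2 * b1 * b2^+4 + 256 * a1^+4 * a2^+2 * b1^+3 * b2^+2 - 320 * a1^+4 * a2^+2 * b1^+5 - 64 * a1^+4 * a2^+3 * b1 * b2^+3 - 64 * a1^+4 * a2^+3 * b1^+3 * b2 - 64 * a1^+5 * b2^+6 - 384 * a1^+5 * b1^+2 * b2^+4 - 320 * a1^+5 * b1^+4 * b2^+2 + 192 * a1^+5 * a2 * b2^+5 + 256 * a1^+5 * a2 * b1^+2 * b2^+3 + 64 * a1^+5 * a2 * b1^+4 * b2 - 192 * a1^+5 * a2^+2 * b2^+4 - 64 * a1^+5 * a2^+2 * b1^+2 * b2^+2 + 128 * a1^+5 * a2^+2 * b1^+4 + 256 * a1^+6 * b1 * b2^+4 + 256 * a1^+6 * b1^+3 * b2^+2 - 64 * a1^+6 * a2 * b1 * b2^+3 - 64 * a1^+6 * a2 * b1^+3 * b2 - 64 * a1^+7 * b2^+4 - 64 * a1^+7 * b1^+2 * b2^+2).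

Definition c230 {K : comNzRingType} (a1 a2 b1 b2 : K) : K :=
  (128 * a2^+4 * b1^+2 * b2^+5 + 256 * a2^+4 * b1^+4 * b2^+3 + 128 * a2^+4 * b1^+6 * b2 - 320 * a2^+5 * b1^+2 * b2^+4 - 384 * a2^+5 * b1^+4 * b2^+2 - 64 * a2^+5 * b1^+6 + 256 * a2^+6 * b1^+2 * b2^+3 + 256 * a2^+6 * b1^+4 * b2 - 64 * a2^+7 * b1^+2 * b2^+2 - 64 * a2^+7 * b1^+4 - 64 * a1 * a2^+3 * b1 * b2^+6 - 64 * a1 * a2^+3 * b1^+3 * b2^+4 + 64 * a1 * a2^+3 * b1^+5 * b2^+2 + 64 * a1 * a2^+3 * b1^+7 + 64 * a1 * a2^+4 * b1 * b2^+5 - 384 * a1 * a2^+4 * b1^+3 * b2^+3 - 448 * a1 * a2^+4 * b1^+5 * b2 + 64 * a1 * a2^+5 * b1 * b2^+4 + 256 * a1 * a2^+5 * b1^+3 * b2^+2 + 192 * a1 * a2^+5 * b1^+5 - 64 * a1 * a2^+6 * b1 * b2^+3 - 64 * a1 * a2^+6 * b1^+3 * b2 - 64 * a1^+2 * a2^+2 * b2^+7 - 64 * a1^+2 * a2^+2 * b1^+2 * b2^+5 + 64 * a1^+2 * a2^+2 * b1^+4 * b2^+3 + 64 * a1^+2 * a2^+2 * b1^+6 * b2 + 256 * a1^+2 * a2^+3 * b2^+6 + 256 * a1^+2 * a2^+3 * b1^+2 * b2^+4 - 256 * a1^+2 * a2^+3 * b1^+4 * b2^+2 - 256 * a1^+2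 * a2^+3 * b1^+6 - 320 * a1^+2 * a2^+4 * b2^+5 + 256 * a1^+2 * a2^+4 * b1^+2 * b2^+3 + 576 * a1^+2 * a2^+4 * b1^+4 * b2 + 128 * a1^+2 * a2^+5 * b2^+4 - 64 * a1^+2 * a2^+5 * b1^+2 * b2^+2 - 192 * a1^+2 * a2^+5 * b1^+4 - 64 * a1^+3 * a2 * b1 * b2^+6 - 64 * a1^+3 * a2 * b1^+3 * b2^+4 + 64 * a1^+3 * a2 * b1^+5 * b2^+2 + 64 * a1^+3 * a2 * b1^+7 + 256 * a1^+3 * a2^+2 * b1 * b2^+5 - 256 * a1^+3 * a2^+2 * b1^+5 * b2 - 384 * a1^+3 * a2^+3 * b1 * b2^+4 + 384 * a1^+3 * a2^+3 * b1^+5 - 64 * a1^+3 * a2^+4 * b1 * b2^+3 - 64 * a1^+3 * a2^+4 * b1^+3 * b2 - 64 * a1^+4 * b2^+7 - 192 * a1^+4 * b1^+2 * b2^+5 - 192 * a1^+4 * b1^+4 * b2^+3 - 64 * a1^+4 * b1^+6 * b2 + 256 * a1^+4 * a2 * b2^+6 + 576 * a1^+4 * a2 * b1^+2 * b2^+4 + 128 * a1^+4 * a2 * b1^+4 * b2^+2 - 192 * a1^+4 * a2 * b1^+6 - 384 * a1^+4 * a2^+2 * b2^+5 - 256 * a1^+4 * a2^+2 * b1^+2 * b2^+3 + 128 * a1^+4 * a2^+2 * b1^+4 * b2 + 256 * a1^+4 * a2^+3 * b2^+4 + 64 * a1^+4 * a2^+3 * b1^+2 * b2^+2 - 192 * a1^+4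 * a2^+3 * b1^+4 + 192 * a1^+5 * b1 * b2^+5 + 384 * a1^+5 * b1^+3 * b2^+3 + 192 * a1^+5 * b1^+5 * b2 - 448 * a1^+5 * a2 * b1 * b2^+4 - 256 * a1^+5 * a2 * b1^+3 * b2^+2 + 192 * a1^+5 * a2 * b1^+5 + 64 * a1^+5 * a2^+2 * b1 * b2^+3 + 64 * a1^+5 * a2^+2 * b1^+3 * b2 - 64 * a1^+6 * b2^+5 - 256 * a1^+6 * b1^+2 * b2^+3 - 192 * a1^+6 * b1^+4 * b2 + 128 * a1^+6 * a2 * b2^+4 + 64 * a1^+6 * a2 * b1^+2 * b2^+2 - 64 * a1^+6 * a2 * b1^+4 + 64 * a1^+7 * b1 * b2^+3 + 64 * a1^+7 * b1^+3 * b2).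

Definition c140 {K : comNzRingType} (a1 a2 b1 b2 : K) : K :=
  (- 64 * a2^+4 * b1^+3 * b2^+4 - 128 * a2^+4 * b1^+5 * b2^+2 - 64 * a2^+4 * b1^+7 + 128 * a2^+5 * b1^+3 * b2^+3 + 128 * a2^+5 * b1^+5 * b2 - 64 * a2^+6 * b1^+3 * b2^+2 - 64 * a2^+6 * b1^+5 - 64 * a1 * a2^+3 * b1^+2 * b2^+5 - 128 * a1 * a2^+3 * b1^+4 * b2^+3 - 64 * a1 * a2^+3 * b1^+6 * b2 + 256 * a1 * a2^+4 * b1^+2 * b2^+4 + 512 * a1 * a2^+4 * b1^+4 * b2^+2 + 256 * a1 * a2^+4 * b1^+6 - 320 * a1 * a2^+5 * b1^+2 * b2^+3 - 320 * a1 * a2^+5 * b1^+4 * b2 + 128 * a1 * a2^+6 * b1^+2 * b2^+2 + 128 * a1 * a2^+6 * b1^+4 + 128 * a1^+2 * a2^+2 * b1 * b2^+6 + 192 * a1^+2 * a2^+2 * b1^+3 * b2^+4 - 64 * a1^+2 * a2^+2 * b1^+7 - 320 * a1^+2 * a2^+3 * b1 * b2^+5 - 128 * a1^+2 * a2^+3 * b1^+3 * b2^+3 + 192 * a1^+2 * a2^+3 * b1^+5 * b2 + 256 * a1^+2 * a2^+4 * b1 * b2^+4 - 128 * a1^+2 * a2^+4 * b1^+3 * b2^+2 - 384 * a1^+2 * a2^+4 * b1^+5 - 64 * a1^+2 * a2^+5 * b1 * b2^+3 - 64 * a1^+2 * a2^+5 * b1^+3 * b2 - 64 * a1^+3 *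 a2 * b1^+2 * b2^+5 - 128 * a1^+3 * a2 * b1^+4 * b2^+3 - 64 * a1^+3 * a2 * b1^+6 * b2 - 64 * a1^+3 * a2^+2 * b2^+6 - 128 * a1^+3 * a2^+2 * b1^+2 * b2^+4 + 192 * a1^+3 * a2^+2 * b1^+4 * b2^+2 + 256 * a1^+3 * a2^+2 * b1^+6 + 128 * a1^+3 * a2^+3 * b2^+5 - 128 * a1^+3 * a2^+3 * b1^+2 * b2^+3 - 256 * a1^+3 * a2^+3 * b1^+4 * b2 - 64 * a1^+3 * a2^+4 * b2^+4 + 192 * a1^+3 * a2^+4 * b1^+2 * b2^+2 + 256 * a1^+3 * a2^+4 * b1^+4 + 128 * a1^+4 * b1 * b2^+6 + 256 * a1^+4 * b1^+3 * b2^+4 + 128 * a1^+4 * b1^+5 * b2^+2 - 320 * a1^+4 * a2 * b1 * b2^+5 - 256 * a1^+4 * a2 * b1^+3 * b2^+3 + 64 * a1^+4 * a2 * b1^+5 * b2 + 512 * a1^+4 * a2^+2 * b1 * b2^+4 + 192 * a1^+4 * a2^+2 * b1^+3 * b2^+2 - 320 * a1^+4 * a2^+2 * b1^+5 - 128 * a1^+4 * a2^+3 * b1 * b2^+3 - 128 * a1^+4 * a2^+3 * b1^+3 * b2 - 64 * a1^+5 * b2^+6 - 384 * a1^+5 * b1^+2 * b2^+4 - 320 * a1^+5 * b1^+4 * b2^+2 + 128 * a1^+5 * a2 * b2^+5 + 192 * a1^+5 * a2 * b1^+2 * b2^+3 + 64 * a1^+5 * a2 * b1^+4 * b2 - 128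 * a1^+5 * a2^+2 * b2^+4 + 128 * a1^+5 * a2^+2 * b1^+4 + 256 * a1^+6 * b1 * b2^+4 + 256 * a1^+6 * b1^+3 * b2^+2 - 64 * a1^+6 * a2 * b1 * b2^+3 - 64 * a1^+6 * a2 * b1^+3 * b2 - 64 * a1^+7 * b2^+4 - 64 * a1^+7 * b1^+2 * b2^+2).

Definition c050 {K : comNzRingType} (a1 a2 b1 b2 : K) : K :=
  (64 * a1 * a2^+3 * b1^+3 * b2^+4 + 128 * a1 * a2^+3 * b1^+5 * b2^+2 + 64 * a1 * a2^+3 * b1^+7 - 128 * a1 * a2^+4 * b1^+3 * b2^+3 - 128 * a1 * a2^+4 * b1^+5 * b2 + 64 * a1 * a2^+5 * b1^+3 * b2^+2 + 64 * a1 * a2^+5 * b1^+5 - 64 * a1^+2 * a2^+2 * b1^+2 * b2^+5 - 128 * a1^+2 * a2^+2 * b1^+4 * b2^+3 - 64 * a1^+2 * a2^+2 * b1^+6 * b2 + 64 * a1^+2 * a2^+3 * b1^+2 * b2^+4 - 128 * a1^+2 * a2^+3 * b1^+4 * b2^+2 - 192 * a1^+2 * a2^+3 * b1^+6 + 64 * a1^+2 * a2^+4 * b1^+2 * b2^+3 + 64 * a1^+2 * a2^+4 * b1^+4 * b2 - 64 * a1^+2 * a2^+5 * b1^+2 * b2^+2 - 64 * a1^+2 * a2^+5 * b1^+4 + 64 * a1^+3 * a2 * b1^+3 * b2^+4 + 128 * a1^+3 * a2 * b1^+5 * b2^+2 + 64 * a1^+3 * a2 * b1^+7 + 64 * a1^+3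 * a2^+2 * b1 * b2^+5 + 128 * a1^+3 * a2^+2 * b1^+3 * b2^+3 + 64 * a1^+3 * a2^+2 * b1^+5 * b2 - 128 * a1^+3 * a2^+3 * b1 * b2^+4 + 128 * a1^+3 * a2^+3 * b1^+3 * b2^+2 + 256 * a1^+3 * a2^+3 * b1^+5 + 64 * a1^+3 * a2^+4 * b1 * b2^+3 + 64 * a1^+3 * a2^+4 * b1^+3 * b2 - 64 * a1^+4 * b1^+2 * b2^+5 - 128 * a1^+4 * b1^+4 * b2^+3 - 64 * a1^+4 * b1^+6 * b2 + 64 * a1^+4 * a2 * b1^+2 * b2^+4 - 128 * a1^+4 * a2 * b1^+4 * b2^+2 - 192 * a1^+4 * a2 * b1^+6 - 128 * a1^+4 * a2^+2 * b1^+2 * b2^+3 - 128 * a1^+4 * a2^+2 * b1^+4 * b2 - 128 * a1^+4 * a2^+3 * b1^+2 * b2^+2 - 128 * a1^+4 * a2^+3 * b1^+4 + 64 * a1^+5 * b1 * b2^+5 + 256 * a1^+5 * b1^+3 * b2^+3 + 192 * a1^+5 * b1^+5 * b2 - 128 * a1^+5 * a2 * b1 * b2^+4 + 64 * a1^+5 * a2 * b1^+3 * b2^+2 + 192 * a1^+5 * a2 * b1^+5 + 128 * a1^+5 * a2^+2 * b1 * b2^+3 + 128 * a1^+5 * a2^+2 * b1^+3 * b2 - 192 * a1^+6 * b1^+2 * b2^+3 - 192 * a1^+6 * b1^+4 * b2 - 64 * a1^+6 * a2 * b1^+2 * b2^+2 - 64 * a1^+6 * a2 * b1^+4 + 64 *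 a1^+7 * b1 * b2^+3 + 64 * a1^+7 * b1^+3 * b2).

Definition c401 {K : comNzRingType} (a1 a2 b1 b2 : K) : K :=
  (16 * a2^+4 * b2^+8 + 32 * a2^+4 * b1^+2 * b2^+6 + 16 * a2^+4 * b1^+4 * b2^+4 - 64 * a2^+5 * b2^+7 - 160 * a2^+5 * b1^+2 * b2^+5 - 160 * a2^+5 * b1^+4 * b2^+3 - 64 * a2^+5 * b1^+6 * b2 + 96 * a2^+6 * b2^+6 + 192 * a2^+6 * b1^+2 * b2^+4 + 240 * a2^+6 * b1^+4 * b2^+2 + 16 * a2^+6 * b1^+6 - 64 * a2^+7 * b2^+5 - 32 * a2^+7 * b1^+2 * b2^+3 - 160 * a2^+7 * b1^+4 * b2 + 16 * a2^+8 * b2^+4 - 32 * a2^+8 * b1^+2 * b2^+2 + 16 * a2^+8 * b1^+4 + 64 * a1 * a2^+3 * b1 * b2^+7 + 128 * a1 * a2^+3 * b1^+3 * b2^+5 + 64 * a1 * a2^+3 * b1^+5 * b2^+3 - 64 * a1 * a2^+4 * b1 * b2^+6 + 32 * a1 * a2^+4 * b1^+3 * b2^+4 + 96 * a1 * a2^+4 * b1^+5 * b2^+2 - 320 * a1 * a2^+5 * b1^+3 * b2^+3 + 64 * a1 * a2^+5 * b1^+5 * b2 - 64 * a1 * a2^+6 * b1 * b2^+4 + 416 * a1 * a2^+6 * b1^+3 * b2^+2 - 32 * a1 * a2^+6 * b1^+5 + 64 * a1 * a2^+7 * b1 * b2^+3 - 64 * a1 * a2^+7 * b1^+3 * b2 -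 32 * a1^+2 * a2^+2 * b2^+8 + 96 * a1^+2 * a2^+2 * b1^+4 * b2^+4 + 64 * a1^+2 * a2^+2 * b1^+6 * b2^+2 - 32 * a1^+2 * a2^+3 * b2^+7 - 512 * a1^+2 * a2^+3 * b1^+2 * b2^+5 - 608 * a1^+2 * a2^+3 * b1^+4 * b2^+3 - 128 * a1^+2 * a2^+3 * b1^+6 * b2 + 192 * a1^+2 * a2^+4 * b2^+6 + 736 * a1^+2 * a2^+4 * b1^+2 * b2^+4 + 304 * a1^+2 * a2^+4 * b1^+4 * b2^+2 + 16 * a1^+2 * a2^+4 * b1^+6 - 160 * a1^+2 * a2^+5 * b2^+5 - 512 * a1^+2 * a2^+5 * b1^+2 * b2^+3 - 160 * a1^+2 * a2^+5 * b1^+4 * b2 + 32 * a1^+2 * a2^+6 * b2^+4 + 32 * a1^+2 * a2^+6 * b1^+4 - 64 * a1^+3 * a2 * b1 * b2^+7 - 128 * a1^+3 * a2 * b1^+3 * b2^+5 - 64 * a1^+3 * a2 * b1^+5 * b2^+3 + 416 * a1^+3 * a2^+2 * b1 * b2^+6 + 512 * a1^+3 * a2^+2 * b1^+3 * b2^+4 + 96 * a1^+3 * a2^+2 * b1^+5 * b2^+2 - 320 * a1^+3 * a2^+3 * b1 * b2^+5 - 384 * a1^+3 * a2^+3 * b1^+3 * b2^+3 + 192 * a1^+3 * a2^+3 * b1^+5 * b2 + 32 * a1^+3 * a2^+4 * b1 * b2^+4 + 512 * a1^+3 * a2^+4 * b1^+3 * b2^+2 - 32 * a1^+3 * a2^+4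 * b1^+5 + 128 * a1^+3 * a2^+5 * b1 * b2^+3 - 128 * a1^+3 * a2^+5 * b1^+3 * b2 + 16 * a1^+4 * b2^+8 + 32 * a1^+4 * b1^+2 * b2^+6 + 16 * a1^+4 * b1^+4 * b2^+4 - 160 * a1^+4 * a2 * b2^+7 - 160 * a1^+4 * a2 * b1^+2 * b2^+5 + 240 * a1^+4 * a2^+2 * b2^+6 + 304 * a1^+4 * a2^+2 * b1^+2 * b2^+4 - 320 * a1^+4 * a2^+2 * b1^+4 * b2^+2 - 160 * a1^+4 * a2^+3 * b2^+5 - 608 * a1^+4 * a2^+3 * b1^+2 * b2^+3 + 16 * a1^+4 * a2^+4 * b2^+4 + 96 * a1^+4 * a2^+4 * b1^+2 * b2^+2 + 16 * a1^+4 * a2^+4 * b1^+4 - 32 * a1^+5 * b1 * b2^+6 - 32 * a1^+5 * b1^+3 * b2^+4 + 64 * a1^+5 * a2 * b1 * b2^+5 + 192 * a1^+5 * a2 * b1^+3 * b2^+3 + 96 * a1^+5 * a2^+2 * b1 * b2^+4 + 96 * a1^+5 * a2^+2 * b1^+3 * b2^+2 + 64 * a1^+5 * a2^+3 * b1 * b2^+3 - 64 * a1^+5 * a2^+3 * b1^+3 * b2 + 16 * a1^+6 * b2^+6 + 16 * a1^+6 * b1^+2 * b2^+4 - 64 * a1^+6 * a2 * b2^+5 - 128 * a1^+6 * a2 * b1^+2 * b2^+3 + 64 * a1^+6 * a2^+2 * b1^+2 * b2^+2).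

Definition c311 {K : comNzRingType} (a1 a2 b1 b2 : K) : K :=
  (64 * a2^+5 * b1 * b2^+6 + 192 * a2^+5 * b1^+3 * b2^+4 + 192 * a2^+5 * b1^+5 * b2^+2 + 64 * a2^+5 * b1^+7 - 192 * a2^+6 * b1 * b2^+5 - 128 * a2^+6 * b1^+3 * b2^+3 - 320 * a2^+6 * b1^+5 * b2 + 192 * a2^+7 * b1 * b2^+4 - 128 * a2^+7 * b1^+3 * b2^+2 + 128 * a2^+7 * b1^+5 - 64 * a2^+8 * b1 * b2^+3 + 64 * a2^+8 * b1^+3 * b2 - 64 * a1 * a2^+3 * b2^+8 - 192 * a1 * a2^+3 * b1^+2 * b2^+6 - 192 * a1 * a2^+3 * b1^+4 * b2^+4 - 64 * a1 * a2^+3 * b1^+6 * b2^+2 + 192 * a1 * a2^+4 * b2^+7 + 256 * a1 * a2^+4 * b1^+2 * b2^+5 - 64 * a1 * a2^+4 * b1^+4 * b2^+3 - 128 * a1 * a2^+4 * b1^+6 * b2 - 192 * a1 * a2^+5 * b2^+6 - 640 * a1 * a2^+5 * b1^+2 * b2^+4 + 448 * a1 * a2^+5 * b1^+4 * b2^+2 - 128 * a1 * a2^+5 * b1^+6 + 64 * a1 * a2^+6 * b2^+5 + 704 * a1 * a2^+6 * b1^+2 * b2^+3 - 192 * a1 * a2^+6 * b1^+4 * b2 - 128 * a1 * a2^+7 * b1^+2 * b2^+2 - 128 * a1^+2 * a2^+2 * b1 * b2^+7 - 384 * a1^+2 * a2^+2 * b1^+3 * b2^+5 - 384 * a1^+2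 * a2^+2 * b1^+5 * b2^+3 - 128 * a1^+2 * a2^+2 * b1^+7 * b2 + 704 * a1^+2 * a2^+3 * b1 * b2^+6 + 1536 * a1^+2 * a2^+3 * b1^+3 * b2^+4 + 960 * a1^+2 * a2^+3 * b1^+5 * b2^+2 + 128 * a1^+2 * a2^+3 * b1^+7 - 640 * a1^+2 * a2^+4 * b1 * b2^+5 - 1280 * a1^+2 * a2^+4 * b1^+3 * b2^+3 - 256 * a1^+2 * a2^+4 * b1^+5 * b2 + 256 * a1^+2 * a2^+5 * b1 * b2^+4 - 64 * a1^+2 * a2^+5 * b1^+3 * b2^+2 + 256 * a1^+2 * a2^+5 * b1^+5 - 192 * a1^+2 * a2^+6 * b1 * b2^+3 + 192 * a1^+2 * a2^+6 * b1^+3 * b2 + 64 * a1^+3 * a2 * b2^+8 + 192 * a1^+3 * a2 * b1^+2 * b2^+6 + 192 * a1^+3 * a2 * b1^+4 * b2^+4 + 64 * a1^+3 * a2 * b1^+6 * b2^+2 - 128 * a1^+3 * a2^+2 * b2^+7 - 64 * a1^+3 * a2^+2 * b1^+2 * b2^+5 + 256 * a1^+3 * a2^+2 * b1^+4 * b2^+3 + 192 * a1^+3 * a2^+2 * b1^+6 * b2 - 128 * a1^+3 * a2^+3 * b2^+6 - 1280 * a1^+3 * a2^+3 * b1^+2 * b2^+4 - 384 * a1^+3 * a2^+3 * b1^+4 * b2^+2 - 256 * a1^+3 * a2^+3 * b1^+6 + 192 * a1^+3 * a2^+4 * b2^+5 + 1536 * a1^+3 * a2^+4 * b1^+2 * b2^+3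 - 384 * a1^+3 * a2^+4 * b1^+4 * b2 - 384 * a1^+3 * a2^+5 * b1^+2 * b2^+2 - 192 * a1^+4 * a2 * b1 * b2^+6 - 384 * a1^+4 * a2 * b1^+3 * b2^+4 - 192 * a1^+4 * a2 * b1^+5 * b2^+2 + 448 * a1^+4 * a2^+2 * b1 * b2^+5 - 384 * a1^+4 * a2^+2 * b1^+3 * b2^+3 + 64 * a1^+4 * a2^+2 * b1^+5 * b2 - 64 * a1^+4 * a2^+3 * b1 * b2^+4 + 256 * a1^+4 * a2^+3 * b1^+3 * b2^+2 + 128 * a1^+4 * a2^+3 * b1^+5 - 192 * a1^+4 * a2^+4 * b1 * b2^+3 + 192 * a1^+4 * a2^+4 * b1^+3 * b2 + 128 * a1^+5 * b2^+7 + 256 * a1^+5 * b1^+2 * b2^+5 + 128 * a1^+5 * b1^+4 * b2^+3 - 320 * a1^+5 * a2 * b2^+6 - 256 * a1^+5 * a2 * b1^+2 * b2^+4 + 64 * a1^+5 * a2 * b1^+4 * b2^+2 + 192 * a1^+5 * a2^+2 * b2^+5 + 960 * a1^+5 * a2^+2 * b1^+2 * b2^+3 - 192 * a1^+5 * a2^+2 * b1^+4 * b2 - 384 * a1^+5 * a2^+3 * b1^+2 * b2^+2 - 128 * a1^+6 * b1 * b2^+5 - 256 * a1^+6 * b1^+3 * b2^+3 - 128 * a1^+6 * a2 * b1 * b2^+4 + 192 * a1^+6 * a2 * b1^+3 * b2^+2 - 64 * a1^+6 * a2^+2 * b1 * b2^+3 + 64 * a1^+6 * a2^+2 * b1^+3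 * b2 + 64 * a1^+7 * b2^+5 + 128 * a1^+7 * b1^+2 * b2^+3 - 128 * a1^+7 * a2 * b1^+2 * b2^+2).

Definition c221 {K : comNzRingType} (a1 a2 b1 b2 : K) : K :=
  (- 32 * a2^+4 * b1^+2 * b2^+6 - 64 * a2^+4 * b1^+4 * b2^+4 - 32 * a2^+4 * b1^+6 * b2^+2 - 96 * a2^+5 * b1^+2 * b2^+5 - 256 * a2^+5 * b1^+4 * b2^+3 - 160 * a2^+5 * b1^+6 * b2 + 352 * a2^+6 * b1^+2 * b2^+4 + 96 * a2^+6 * b1^+4 * b2^+2 + 128 * a2^+6 * b1^+6 - 288 * a2^+7 * b1^+2 * b2^+3 + 32 * a2^+7 * b1^+4 * b2 + 64 * a2^+8 * b1^+2 * b2^+2 + 64 * a1 * a2^+3 * b1 * b2^+7 + 64 * a1 * a2^+3 * b1^+3 * b2^+5 - 64 * a1 * a2^+3 * b1^+5 * b2^+3 - 64 * a1 * a2^+3 * b1^+7 * b2 + 352 * a1 * a2^+4 * b1^+3 * b2^+4 + 384 * a1 * a2^+4 * b1^+5 * b2^+2 + 32 * a1 * a2^+4 * b1^+7 - 128 * a1 * a2^+5 * b1 * b2^+5 + 640 * a1 * a2^+5 * b1^+3 * b2^+3 - 224 * a1 * a2^+6 * b1^+3 * b2^+2 - 160 * a1 * a2^+6 * b1^+5 + 64 * a1 * a2^+7 * b1 * b2^+3 - 64 * a1 * a2^+7 * b1^+3 * b2 + 64 * a1^+2 * a2^+2 * b2^+8 + 448 * a1^+2 * a2^+2 * b1^+2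 * b2^+6 + 768 * a1^+2 * a2^+2 * b1^+4 * b2^+4 + 448 * a1^+2 * a2^+2 * b1^+6 * b2^+2 + 64 * a1^+2 * a2^+2 * b1^+8 - 288 * a1^+2 * a2^+3 * b2^+7 - 1440 * a1^+2 * a2^+3 * b1^+2 * b2^+5 - 1376 * a1^+2 * a2^+3 * b1^+4 * b2^+3 - 224 * a1^+2 * a2^+3 * b1^+6 * b2 + 352 * a1^+2 * a2^+4 * b2^+6 + 832 * a1^+2 * a2^+4 * b1^+2 * b2^+4 + 192 * a1^+2 * a2^+4 * b1^+4 * b2^+2 + 96 * a1^+2 * a2^+4 * b1^+6 - 96 * a1^+2 * a2^+5 * b2^+5 - 1440 * a1^+2 * a2^+5 * b1^+2 * b2^+3 + 384 * a1^+2 * a2^+5 * b1^+4 * b2 - 32 * a1^+2 * a2^+6 * b2^+4 + 448 * a1^+2 * a2^+6 * b1^+2 * b2^+2 - 32 * a1^+2 * a2^+6 * b1^+4 - 64 * a1^+3 * a2 * b1 * b2^+7 - 64 * a1^+3 * a2 * b1^+3 * b2^+5 + 64 * a1^+3 * a2 * b1^+5 * b2^+3 + 64 * a1^+3 * a2 * b1^+7 * b2 - 224 * a1^+3 * a2^+2 * b1 * b2^+6 - 1376 * a1^+3 * a2^+2 * b1^+3 * b2^+4 - 1440 * a1^+3 * a2^+2 * b1^+5 * b2^+2 - 288 * a1^+3 * a2^+2 * b1^+7 + 640 * a1^+3 * a2^+3 * b1 * b2^+5 + 2816 * a1^+3 * a2^+3 * b1^+3 * b2^+3 + 640 * a1^+3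 * a2^+3 * b1^+5 * b2 + 352 * a1^+3 * a2^+4 * b1 * b2^+4 - 1376 * a1^+3 * a2^+4 * b1^+3 * b2^+2 - 256 * a1^+3 * a2^+4 * b1^+5 + 64 * a1^+3 * a2^+5 * b1 * b2^+3 - 64 * a1^+3 * a2^+5 * b1^+3 * b2 - 32 * a1^+4 * b1^+2 * b2^+6 - 64 * a1^+4 * b1^+4 * b2^+4 - 32 * a1^+4 * b1^+6 * b2^+2 + 32 * a1^+4 * a2 * b2^+7 + 384 * a1^+4 * a2 * b1^+2 * b2^+5 + 352 * a1^+4 * a2 * b1^+4 * b2^+3 + 96 * a1^+4 * a2^+2 * b2^+6 + 192 * a1^+4 * a2^+2 * b1^+2 * b2^+4 + 832 * a1^+4 * a2^+2 * b1^+4 * b2^+2 + 352 * a1^+4 * a2^+2 * b1^+6 - 256 * a1^+4 * a2^+3 * b2^+5 - 1376 * a1^+4 * a2^+3 * b1^+2 * b2^+3 + 352 * a1^+4 * a2^+3 * b1^+4 * b2 - 64 * a1^+4 * a2^+4 * b2^+4 + 768 * a1^+4 * a2^+4 * b1^+2 * b2^+2 - 64 * a1^+4 * a2^+4 * b1^+4 - 160 * a1^+5 * b1 * b2^+6 - 256 * a1^+5 * b1^+3 * b2^+4 - 96 * a1^+5 * b1^+5 * b2^+2 + 640 * a1^+5 * a2 * b1^+3 * b2^+3 - 128 * a1^+5 * a2 * b1^+5 * b2 + 384 * a1^+5 * a2^+2 * b1 * b2^+4 - 1440 * a1^+5 * a2^+2 * b1^+3 * b2^+2 - 96 * a1^+5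 * a2^+2 * b1^+5 - 64 * a1^+5 * a2^+3 * b1 * b2^+3 + 64 * a1^+5 * a2^+3 * b1^+3 * b2 + 128 * a1^+6 * b2^+6 + 96 * a1^+6 * b1^+2 * b2^+4 + 352 * a1^+6 * b1^+4 * b2^+2 - 160 * a1^+6 * a2 * b2^+5 - 224 * a1^+6 * a2 * b1^+2 * b2^+3 - 32 * a1^+6 * a2^+2 * b2^+4 + 448 * a1^+6 * a2^+2 * b1^+2 * b2^+2 - 32 * a1^+6 * a2^+2 * b1^+4 + 32 * a1^+7 * b1 * b2^+4 - 288 * a1^+7 * b1^+3 * b2^+2 - 64 * a1^+7 * a2 * b1 * b2^+3 + 64 * a1^+7 * a2 * b1^+3 * b2 + 64 * a1^+8 * b1^+2 * b2^+2).

Definition c131 {K : comNzRingType} (a1 a2 b1 b2 : K) : K :=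
  (128 * a2^+5 * b1^+3 * b2^+4 + 256 * a2^+5 * b1^+5 * b2^+2 + 128 * a2^+5 * b1^+7 - 256 * a2^+6 * b1^+3 * b2^+3 - 128 * a2^+6 * b1^+5 * b2 + 128 * a2^+7 * b1^+3 * b2^+2 + 64 * a2^+7 * b1^+5 + 64 * a1 * a2^+3 * b1^+2 * b2^+6 + 192 * a1 * a2^+3 * b1^+4 * b2^+4 + 192 * a1 * a2^+3 * b1^+6 * b2^+2 + 64 * a1 * a2^+3 * b1^+8 - 192 * a1 * a2^+4 * b1^+2 * b2^+5 - 384 * a1 * a2^+4 * b1^+4 * b2^+3 - 192 * a1 * a2^+4 * b1^+6 * b2 + 64 * a1 * a2^+5 * b1^+2 * b2^+4 - 256 * a1 * a2^+5 * b1^+4 * b2^+2 - 320 * a1 * a2^+5 * b1^+6 + 192 * a1 * a2^+6 * b1^+2 * b2^+3 - 128 * a1 * a2^+6 * b1^+4 * b2 - 128 * a1 * a2^+7 * b1^+2 * b2^+2 - 128 * a1^+2 * a2^+2 * b1 * b2^+7 - 384 * a1^+2 * a2^+2 * b1^+3 * b2^+5 - 384 * a1^+2 * a2^+2 * b1^+5 * b2^+3 - 128 * a1^+2 * a2^+2 * b1^+7 * b2 + 192 * a1^+2 * a2^+3 * b1 * b2^+6 + 256 * a1^+2 * a2^+3 * b1^+3 * b2^+4 - 64 * a1^+2 * a2^+3 * b1^+5 * b2^+2 - 128 * a1^+2 * a2^+3 * b1^+7 + 64 * a1^+2 * a2^+4 * b1 * b2^+5 - 384 * a1^+2 * a2^+4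 * b1^+3 * b2^+3 + 448 * a1^+2 * a2^+4 * b1^+5 * b2 - 192 * a1^+2 * a2^+5 * b1 * b2^+4 + 960 * a1^+2 * a2^+5 * b1^+3 * b2^+2 + 192 * a1^+2 * a2^+5 * b1^+5 + 64 * a1^+2 * a2^+6 * b1 * b2^+3 - 64 * a1^+2 * a2^+6 * b1^+3 * b2 - 64 * a1^+3 * a2 * b1^+2 * b2^+6 - 192 * a1^+3 * a2 * b1^+4 * b2^+4 - 192 * a1^+3 * a2 * b1^+6 * b2^+2 - 64 * a1^+3 * a2 * b1^+8 + 128 * a1^+3 * a2^+2 * b2^+7 + 960 * a1^+3 * a2^+2 * b1^+2 * b2^+5 + 1536 * a1^+3 * a2^+2 * b1^+4 * b2^+3 + 704 * a1^+3 * a2^+2 * b1^+6 * b2 - 256 * a1^+3 * a2^+3 * b2^+6 - 384 * a1^+3 * a2^+3 * b1^+2 * b2^+4 - 1280 * a1^+3 * a2^+3 * b1^+4 * b2^+2 - 128 * a1^+3 * a2^+3 * b1^+6 + 128 * a1^+3 * a2^+4 * b2^+5 + 256 * a1^+3 * a2^+4 * b1^+2 * b2^+3 - 64 * a1^+3 * a2^+4 * b1^+4 * b2 - 384 * a1^+3 * a2^+5 * b1^+2 * b2^+2 - 128 * a1^+4 * a2 * b1 * b2^+6 - 64 * a1^+4 * a2 * b1^+3 * b2^+4 + 256 * a1^+4 * a2 * b1^+5 * b2^+2 + 192 * a1^+4 * a2 * b1^+7 - 256 * a1^+4 * a2^+2 * b1 * b2^+5 - 1280 * a1^+4 * a2^+2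 * b1^+3 * b2^+3 - 640 * a1^+4 * a2^+2 * b1^+5 * b2 - 384 * a1^+4 * a2^+3 * b1 * b2^+4 + 1536 * a1^+4 * a2^+3 * b1^+3 * b2^+2 + 192 * a1^+4 * a2^+3 * b1^+5 + 192 * a1^+4 * a2^+4 * b1 * b2^+3 - 192 * a1^+4 * a2^+4 * b1^+3 * b2 + 64 * a1^+5 * b2^+7 + 192 * a1^+5 * b1^+2 * b2^+5 + 192 * a1^+5 * b1^+4 * b2^+3 + 64 * a1^+5 * b1^+6 * b2 - 128 * a1^+5 * a2 * b2^+6 + 448 * a1^+5 * a2 * b1^+2 * b2^+4 - 640 * a1^+5 * a2 * b1^+4 * b2^+2 - 192 * a1^+5 * a2 * b1^+6 + 256 * a1^+5 * a2^+2 * b2^+5 - 64 * a1^+5 * a2^+2 * b1^+2 * b2^+3 + 256 * a1^+5 * a2^+2 * b1^+4 * b2 - 384 * a1^+5 * a2^+3 * b1^+2 * b2^+2 - 320 * a1^+6 * b1 * b2^+5 - 128 * a1^+6 * b1^+3 * b2^+3 - 192 * a1^+6 * b1^+5 * b2 - 192 * a1^+6 * a2 * b1 * b2^+4 + 704 * a1^+6 * a2 * b1^+3 * b2^+2 + 64 * a1^+6 * a2 * b1^+5 + 192 * a1^+6 * a2^+2 * b1 * b2^+3 - 192 * a1^+6 * a2^+2 * b1^+3 * b2 + 128 * a1^+7 * b2^+5 - 128 * a1^+7 * b1^+2 * b2^+3 + 192 * a1^+7 * b1^+4 * b2 - 128 * a1^+7 * a2 * b1^+2 * b2^+2 + 64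 * a1^+8 * b1 * b2^+3 - 64 * a1^+8 * b1^+3 * b2).

Definition c041 {K : comNzRingType} (a1 a2 b1 b2 : K) : K :=
  (16 * a2^+4 * b1^+4 * b2^+4 + 32 * a2^+4 * b1^+6 * b2^+2 + 16 * a2^+4 * b1^+8 - 32 * a2^+5 * b1^+4 * b2^+3 - 32 * a2^+5 * b1^+6 * b2 + 16 * a2^+6 * b1^+4 * b2^+2 + 16 * a2^+6 * b1^+6 - 64 * a1 * a2^+3 * b1^+3 * b2^+5 - 128 * a1 * a2^+3 * b1^+5 * b2^+3 - 64 * a1 * a2^+3 * b1^+7 * b2 - 160 * a1 * a2^+4 * b1^+5 * b2^+2 - 160 * a1 * a2^+4 * b1^+7 + 192 * a1 * a2^+5 * b1^+3 * b2^+3 + 64 * a1 * a2^+5 * b1^+5 * b2 - 128 * a1 * a2^+6 * b1^+3 * b2^+2 - 64 * a1 * a2^+6 * b1^+5 + 64 * a1^+2 * a2^+2 * b1^+2 * b2^+6 + 96 * a1^+2 * a2^+2 * b1^+4 * b2^+4 - 32 * a1^+2 * a2^+2 * b1^+8 + 96 * a1^+2 * a2^+3 * b1^+2 * b2^+5 + 512 * a1^+2 * a2^+3 * b1^+4 * b2^+3 + 416 * a1^+2 * a2^+3 * b1^+6 * b2 - 320 * a1^+2 * a2^+4 * b1^+2 * b2^+4 + 304 * a1^+2 * a2^+4 * b1^+4 * b2^+2 + 240 * a1^+2 * a2^+4 * b1^+6 + 96 * a1^+2 * a2^+5 * b1^+2 * b2^+3 + 96 * a1^+2 * a2^+5 *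 b1^+4 * b2 + 64 * a1^+2 * a2^+6 * b1^+2 * b2^+2 + 64 * a1^+3 * a2 * b1^+3 * b2^+5 + 128 * a1^+3 * a2 * b1^+5 * b2^+3 + 64 * a1^+3 * a2 * b1^+7 * b2 - 128 * a1^+3 * a2^+2 * b1 * b2^+6 - 608 * a1^+3 * a2^+2 * b1^+3 * b2^+4 - 512 * a1^+3 * a2^+2 * b1^+5 * b2^+2 - 32 * a1^+3 * a2^+2 * b1^+7 + 192 * a1^+3 * a2^+3 * b1 * b2^+5 - 384 * a1^+3 * a2^+3 * b1^+3 * b2^+3 - 320 * a1^+3 * a2^+3 * b1^+5 * b2 - 608 * a1^+3 * a2^+4 * b1^+3 * b2^+2 - 160 * a1^+3 * a2^+4 * b1^+5 - 64 * a1^+3 * a2^+5 * b1 * b2^+3 + 64 * a1^+3 * a2^+5 * b1^+3 * b2 + 16 * a1^+4 * b1^+4 * b2^+4 + 32 * a1^+4 * b1^+6 * b2^+2 + 16 * a1^+4 * b1^+8 + 96 * a1^+4 * a2 * b1^+2 * b2^+5 + 32 * a1^+4 * a2 * b1^+4 * b2^+3 - 64 * a1^+4 * a2 * b1^+6 * b2 + 16 * a1^+4 * a2^+2 * b2^+6 + 304 * a1^+4 * a2^+2 * b1^+2 * b2^+4 + 736 * a1^+4 * a2^+2 * b1^+4 * b2^+2 + 192 * a1^+4 * a2^+2 * b1^+6 - 32 * a1^+4 * a2^+3 * b2^+5 + 512 * a1^+4 * a2^+3 * b1^+2 * b2^+3 + 32 * a1^+4 * a2^+3 * b1^+4 * b2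 + 16 * a1^+4 * a2^+4 * b2^+4 + 96 * a1^+4 * a2^+4 * b1^+2 * b2^+2 + 16 * a1^+4 * a2^+4 * b1^+4 - 64 * a1^+5 * b1 * b2^+6 - 160 * a1^+5 * b1^+3 * b2^+4 - 160 * a1^+5 * b1^+5 * b2^+2 - 64 * a1^+5 * b1^+7 + 64 * a1^+5 * a2 * b1 * b2^+5 - 320 * a1^+5 * a2 * b1^+3 * b2^+3 - 160 * a1^+5 * a2^+2 * b1 * b2^+4 - 512 * a1^+5 * a2^+2 * b1^+3 * b2^+2 - 160 * a1^+5 * a2^+2 * b1^+5 - 128 * a1^+5 * a2^+3 * b1 * b2^+3 + 128 * a1^+5 * a2^+3 * b1^+3 * b2 + 16 * a1^+6 * b2^+6 + 240 * a1^+6 * b1^+2 * b2^+4 + 192 * a1^+6 * b1^+4 * b2^+2 + 96 * a1^+6 * b1^+6 - 32 * a1^+6 * a2 * b2^+5 + 416 * a1^+6 * a2 * b1^+2 * b2^+3 - 64 * a1^+6 * a2 * b1^+4 * b2 + 32 * a1^+6 * a2^+2 * b2^+4 + 32 * a1^+6 * a2^+2 * b1^+4 - 160 * a1^+7 * b1 * b2^+4 - 32 * a1^+7 * b1^+3 * b2^+2 - 64 * a1^+7 * b1^+5 - 64 * a1^+7 * a2 * b1 * b2^+3 + 64 * a1^+7 * a2 * b1^+3 * b2 + 16 * a1^+8 * b2^+4 - 32 * a1^+8 * b1^+2 * b2^+2 + 16 * a1^+8 * b1^+4).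

Definition c302 {K : comNzRingType} (a1 a2 b1 b2 : K) : K :=
  (- 96 * a2^+6 * b1^+3 * b2^+4 - 80 * a2^+6 * b1^+5 * b2^+2 - 16 * a2^+6 * b1^+7 + 64 * a2^+7 * b1^+3 * b2^+3 + 144 * a2^+7 * b1^+5 * b2 + 32 * a2^+8 * b1^+3 * b2^+2 - 32 * a2^+8 * b1^+5 + 32 * a1 * a2^+4 * b1^+2 * b2^+6 + 64 * a1 * a2^+4 * b1^+4 * b2^+4 + 32 * a1 * a2^+4 * b1^+6 * b2^+2 + 256 * a1 * a2^+5 * b1^+2 * b2^+5 + 144 * a1 * a2^+5 * b1^+4 * b2^+3 + 80 * a1 * a2^+5 * b1^+6 * b2 - 224 * a1 * a2^+6 * b1^+2 * b2^+4 - 432 * a1 * a2^+6 * b1^+4 * b2^+2 + 32 * a1 * a2^+6 * b1^+6 - 64 * a1 * a2^+7 * b1^+2 * b2^+3 + 128 * a1 * a2^+7 * b1^+4 * b2 - 64 * a1^+2 * a2^+3 * b1 * b2^+7 - 64 * a1^+2 * a2^+3 * b1^+3 * b2^+5 + 64 * a1^+2 * a2^+3 * b1^+5 * b2^+3 + 64 * a1^+2 * a2^+3 * b1^+7 * b2 - 224 * a1^+2 * a2^+4 * b1 * b2^+6 - 192 * a1^+2 * a2^+4 * b1^+3 * b2^+4 - 480 * a1^+2 * a2^+4 * b1^+5 * b2^+2 - 32 * a1^+2 * a2^+4 * b1^+7 + 256 * a1^+2 * a2^+5 * b1 * b2^+5 + 416 * a1^+2 * a2^+5 * b1^+3 * b2^+3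 + 144 * a1^+2 * a2^+5 * b1^+5 * b2 + 32 * a1^+2 * a2^+6 * b1 * b2^+4 - 96 * a1^+2 * a2^+6 * b1^+3 * b2^+2 - 64 * a1^+2 * a2^+6 * b1^+5 + 32 * a1^+3 * a2^+2 * b2^+8 - 96 * a1^+3 * a2^+2 * b1^+2 * b2^+6 - 288 * a1^+3 * a2^+2 * b1^+4 * b2^+4 - 160 * a1^+3 * a2^+2 * b1^+6 * b2^+2 + 64 * a1^+3 * a2^+3 * b2^+7 + 416 * a1^+3 * a2^+3 * b1^+2 * b2^+5 + 992 * a1^+3 * a2^+3 * b1^+4 * b2^+3 - 96 * a1^+3 * a2^+4 * b2^+6 - 192 * a1^+3 * a2^+4 * b1^+2 * b2^+4 - 752 * a1^+3 * a2^+4 * b1^+4 * b2^+2 + 64 * a1^+3 * a2^+4 * b1^+6 - 64 * a1^+3 * a2^+5 * b1^+2 * b2^+3 + 256 * a1^+3 * a2^+5 * b1^+4 * b2 + 128 * a1^+4 * a2 * b1 * b2^+7 + 256 * a1^+4 * a2 * b1^+3 * b2^+5 + 128 * a1^+4 * a2 * b1^+5 * b2^+3 - 432 * a1^+4 * a2^+2 * b1 * b2^+6 - 752 * a1^+4 * a2^+2 * b1^+3 * b2^+4 + 160 * a1^+4 * a2^+2 * b1^+5 * b2^+2 + 144 * a1^+4 * a2^+3 * b1 * b2^+5 + 992 * a1^+4 * a2^+3 * b1^+3 * b2^+3 - 192 * a1^+4 * a2^+3 * b1^+5 * b2 + 64 * a1^+4 * a2^+4 * b1 * b2^+4 - 288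 * a1^+4 * a2^+4 * b1^+3 * b2^+2 - 32 * a1^+4 * a2^+4 * b1^+5 - 32 * a1^+5 * b2^+8 - 64 * a1^+5 * b1^+2 * b2^+6 - 32 * a1^+5 * b1^+4 * b2^+4 + 144 * a1^+5 * a2 * b2^+7 + 144 * a1^+5 * a2 * b1^+2 * b2^+5 - 192 * a1^+5 * a2 * b1^+4 * b2^+3 - 80 * a1^+5 * a2^+2 * b2^+6 - 480 * a1^+5 * a2^+2 * b1^+2 * b2^+4 + 160 * a1^+5 * a2^+2 * b1^+4 * b2^+2 + 64 * a1^+5 * a2^+3 * b1^+2 * b2^+3 + 128 * a1^+5 * a2^+3 * b1^+4 * b2 + 32 * a1^+6 * b1 * b2^+6 + 64 * a1^+6 * b1^+3 * b2^+4 + 80 * a1^+6 * a2 * b1 * b2^+5 + 32 * a1^+6 * a2^+2 * b1 * b2^+4 - 160 * a1^+6 * a2^+2 * b1^+3 * b2^+2 - 16 * a1^+7 * b2^+6 - 32 * a1^+7 * b1^+2 * b2^+4 + 64 * a1^+7 * a2 * b1^+2 * b2^+3).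

Definition c212 {K : comNzRingType} (a1 a2 b1 b2 : K) : K :=
  (32 * a2^+5 * b1^+2 * b2^+6 + 64 * a2^+5 * b1^+4 * b2^+4 + 32 * a2^+5 * b1^+6 * b2^+2 - 32 * a2^+6 * b1^+2 * b2^+5 + 128 * a2^+6 * b1^+4 * b2^+3 + 128 * a2^+6 * b1^+6 * b2 - 32 * a2^+7 * b1^+2 * b2^+4 + 96 * a2^+7 * b1^+4 * b2^+2 - 112 * a2^+7 * b1^+6 + 32 * a2^+8 * b1^+2 * b2^+3 - 96 * a2^+8 * b1^+4 * b2 - 64 * a1 * a2^+4 * b1 * b2^+7 - 64 * a1 * a2^+4 * b1^+3 * b2^+5 + 64 * a1 * a2^+4 * b1^+5 * b2^+3 + 64 * a1 * a2^+4 * b1^+7 * b2 + 64 * a1 * a2^+5 * b1 * b2^+6 - 512 * a1 * a2^+5 * b1^+3 * b2^+4 - 432 * a1 * a2^+5 * b1^+5 * b2^+2 - 48 * a1 * a2^+5 * b1^+7 + 64 * a1 * a2^+6 * b1 * b2^+5 - 448 * a1 * a2^+6 * b1^+3 * b2^+3 + 336 * a1 * a2^+6 * b1^+5 * b2 - 64 * a1 * a2^+7 * b1 * b2^+4 + 256 * a1 * a2^+7 * b1^+3 * b2^+2 + 32 * a1^+2 * a2^+3 * b2^+8 - 160 * a1^+2 * a2^+3 * b1^+2 * b2^+6 - 480 * a1^+2 * a2^+3 * b1^+4 * b2^+4 - 352 * a1^+2 * a2^+3 * b1^+6 * b2^+2 - 64 * a1^+2 * a2^+3 * b1^+8 - 32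 * a1^+2 * a2^+4 * b2^+7 + 736 * a1^+2 * a2^+4 * b1^+2 * b2^+5 + 624 * a1^+2 * a2^+4 * b1^+4 * b2^+3 + 336 * a1^+2 * a2^+4 * b1^+6 * b2 - 32 * a1^+2 * a2^+5 * b2^+6 + 736 * a1^+2 * a2^+5 * b1^+2 * b2^+4 - 192 * a1^+2 * a2^+5 * b1^+4 * b2^+2 - 144 * a1^+2 * a2^+5 * b1^+6 + 32 * a1^+2 * a2^+6 * b2^+5 - 160 * a1^+2 * a2^+6 * b1^+2 * b2^+3 - 256 * a1^+2 * a2^+6 * b1^+4 * b2 + 256 * a1^+3 * a2^+2 * b1 * b2^+7 + 640 * a1^+3 * a2^+2 * b1^+3 * b2^+5 + 512 * a1^+3 * a2^+2 * b1^+5 * b2^+3 + 128 * a1^+3 * a2^+2 * b1^+7 * b2 - 448 * a1^+3 * a2^+3 * b1 * b2^+6 - 352 * a1^+3 * a2^+3 * b1^+3 * b2^+4 - 416 * a1^+3 * a2^+3 * b1^+5 * b2^+2 + 128 * a1^+3 * a2^+3 * b1^+7 - 512 * a1^+3 * a2^+4 * b1 * b2^+5 - 352 * a1^+3 * a2^+4 * b1^+3 * b2^+3 + 400 * a1^+3 * a2^+4 * b1^+5 * b2 - 64 * a1^+3 * a2^+5 * b1 * b2^+4 + 640 * a1^+3 * a2^+5 * b1^+3 * b2^+2 - 96 * a1^+4 * a2 * b2^+8 - 256 * a1^+4 * a2 * b1^+2 * b2^+6 - 224 * a1^+4 * a2 * b1^+4 * b2^+4 - 64 * a1^+4 * a2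 * b1^+6 * b2^+2 + 96 * a1^+4 * a2^+2 * b2^+7 - 192 * a1^+4 * a2^+2 * b1^+2 * b2^+5 - 128 * a1^+4 * a2^+2 * b1^+4 * b2^+3 - 320 * a1^+4 * a2^+2 * b1^+6 * b2 + 128 * a1^+4 * a2^+3 * b2^+6 + 624 * a1^+4 * a2^+3 * b1^+2 * b2^+4 - 128 * a1^+4 * a2^+3 * b1^+4 * b2^+2 - 64 * a1^+4 * a2^+3 * b1^+6 + 64 * a1^+4 * a2^+4 * b2^+5 - 480 * a1^+4 * a2^+4 * b1^+2 * b2^+3 - 224 * a1^+4 * a2^+4 * b1^+4 * b2 + 336 * a1^+5 * a2 * b1 * b2^+6 + 400 * a1^+5 * a2 * b1^+3 * b2^+4 + 256 * a1^+5 * a2 * b1^+5 * b2^+2 - 432 * a1^+5 * a2^+2 * b1 * b2^+5 - 416 * a1^+5 * a2^+2 * b1^+3 * b2^+3 + 256 * a1^+5 * a2^+2 * b1^+5 * b2 + 64 * a1^+5 * a2^+3 * b1 * b2^+4 + 512 * a1^+5 * a2^+3 * b1^+3 * b2^+2 - 112 * a1^+6 * b2^+7 - 144 * a1^+6 * b1^+2 * b2^+5 - 64 * a1^+6 * b1^+4 * b2^+3 + 128 * a1^+6 * a2 * b2^+6 + 336 * a1^+6 * a2 * b1^+2 * b2^+4 - 320 * a1^+6 * a2 * b1^+4 * b2^+2 + 32 * a1^+6 * a2^+2 * b2^+5 - 352 * a1^+6 * a2^+2 * b1^+2 * b2^+3 - 64 * a1^+6 * a2^+2 * b1^+4 * b2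 - 48 * a1^+7 * b1 * b2^+5 + 128 * a1^+7 * b1^+3 * b2^+3 + 64 * a1^+7 * a2 * b1 * b2^+4 + 128 * a1^+7 * a2 * b1^+3 * b2^+2 - 64 * a1^+8 * b1^+2 * b2^+3).

Definition c122 {K : comNzRingType} (a1 a2 b1 b2 : K) : K :=
  (- 64 * a2^+6 * b1^+3 * b2^+4 - 144 * a2^+6 * b1^+5 * b2^+2 - 112 * a2^+6 * b1^+7 + 128 * a2^+7 * b1^+3 * b2^+3 - 48 * a2^+7 * b1^+5 * b2 - 64 * a2^+8 * b1^+3 * b2^+2 - 64 * a1 * a2^+4 * b1^+2 * b2^+6 - 224 * a1 * a2^+4 * b1^+4 * b2^+4 - 256 * a1 * a2^+4 * b1^+6 * b2^+2 - 96 * a1 * a2^+4 * b1^+8 + 256 * a1 * a2^+5 * b1^+2 * b2^+5 + 400 * a1 * a2^+5 * b1^+4 * b2^+3 + 336 * a1 * a2^+5 * b1^+6 * b2 - 320 * a1 * a2^+6 * b1^+2 * b2^+4 + 336 * a1 * a2^+6 * b1^+4 * b2^+2 + 128 * a1 * a2^+6 * b1^+6 + 128 * a1 * a2^+7 * b1^+2 * b2^+3 + 64 * a1 * a2^+7 * b1^+4 * b2 + 128 * a1^+2 * a2^+3 * b1 * b2^+7 + 512 * a1^+2 * a2^+3 * b1^+3 * b2^+5 + 640 * a1^+2 * a2^+3 * b1^+5 * b2^+3 + 256 * a1^+2 * a2^+3 * b1^+7 * b2 - 320 * a1^+2 * a2^+4 * b1 * b2^+6 - 128 * a1^+2 * a2^+4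 * b1^+3 * b2^+4 - 192 * a1^+2 * a2^+4 * b1^+5 * b2^+2 + 96 * a1^+2 * a2^+4 * b1^+7 + 256 * a1^+2 * a2^+5 * b1 * b2^+5 - 416 * a1^+2 * a2^+5 * b1^+3 * b2^+3 - 432 * a1^+2 * a2^+5 * b1^+5 * b2 - 64 * a1^+2 * a2^+6 * b1 * b2^+4 - 352 * a1^+2 * a2^+6 * b1^+3 * b2^+2 + 32 * a1^+2 * a2^+6 * b1^+5 - 64 * a1^+3 * a2^+2 * b2^+8 - 352 * a1^+3 * a2^+2 * b1^+2 * b2^+6 - 480 * a1^+3 * a2^+2 * b1^+4 * b2^+4 - 160 * a1^+3 * a2^+2 * b1^+6 * b2^+2 + 32 * a1^+3 * a2^+2 * b1^+8 + 128 * a1^+3 * a2^+3 * b2^+7 - 416 * a1^+3 * a2^+3 * b1^+2 * b2^+5 - 352 * a1^+3 * a2^+3 * b1^+4 * b2^+3 - 448 * a1^+3 * a2^+3 * b1^+6 * b2 - 64 * a1^+3 * a2^+4 * b2^+6 - 128 * a1^+3 * a2^+4 * b1^+2 * b2^+4 + 624 * a1^+3 * a2^+4 * b1^+4 * b2^+2 + 128 * a1^+3 * a2^+4 * b1^+6 + 512 * a1^+3 * a2^+5 * b1^+2 * b2^+3 + 64 * a1^+3 * a2^+5 * b1^+4 * b2 + 64 * a1^+4 * a2 * b1 * b2^+7 + 64 * a1^+4 * a2 * b1^+3 * b2^+5 - 64 * a1^+4 * a2 * b1^+5 * b2^+3 - 64 * a1^+4 * a2 * b1^+7 * b2 + 336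 * a1^+4 * a2^+2 * b1 * b2^+6 + 624 * a1^+4 * a2^+2 * b1^+3 * b2^+4 + 736 * a1^+4 * a2^+2 * b1^+5 * b2^+2 - 32 * a1^+4 * a2^+2 * b1^+7 + 400 * a1^+4 * a2^+3 * b1 * b2^+5 - 352 * a1^+4 * a2^+3 * b1^+3 * b2^+3 - 512 * a1^+4 * a2^+3 * b1^+5 * b2 - 224 * a1^+4 * a2^+4 * b1 * b2^+4 - 480 * a1^+4 * a2^+4 * b1^+3 * b2^+2 + 64 * a1^+4 * a2^+4 * b1^+5 + 32 * a1^+5 * b1^+2 * b2^+6 + 64 * a1^+5 * b1^+4 * b2^+4 + 32 * a1^+5 * b1^+6 * b2^+2 - 48 * a1^+5 * a2 * b2^+7 - 432 * a1^+5 * a2 * b1^+2 * b2^+5 - 512 * a1^+5 * a2 * b1^+4 * b2^+3 + 64 * a1^+5 * a2 * b1^+6 * b2 - 144 * a1^+5 * a2^+2 * b2^+6 - 192 * a1^+5 * a2^+2 * b1^+2 * b2^+4 + 736 * a1^+5 * a2^+2 * b1^+4 * b2^+2 - 32 * a1^+5 * a2^+2 * b1^+6 + 640 * a1^+5 * a2^+3 * b1^+2 * b2^+3 - 64 * a1^+5 * a2^+3 * b1^+4 * b2 + 128 * a1^+6 * b1 * b2^+6 + 128 * a1^+6 * b1^+3 * b2^+4 - 32 * a1^+6 * b1^+5 * b2^+2 + 336 * a1^+6 * a2 * b1 * b2^+5 - 448 * a1^+6 * a2 * b1^+3 * b2^+3 + 64 * a1^+6 * a2 * b1^+5 * b2 -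 256 * a1^+6 * a2^+2 * b1 * b2^+4 - 160 * a1^+6 * a2^+2 * b1^+3 * b2^+2 + 32 * a1^+6 * a2^+2 * b1^+5 - 112 * a1^+7 * b2^+6 + 96 * a1^+7 * b1^+2 * b2^+4 - 32 * a1^+7 * b1^+4 * b2^+2 + 256 * a1^+7 * a2 * b1^+2 * b2^+3 - 64 * a1^+7 * a2 * b1^+4 * b2 - 96 * a1^+8 * b1 * b2^+4 + 32 * a1^+8 * b1^+3 * b2^+2).

Definition c032 {K : comNzRingType} (a1 a2 b1 b2 : K) : K :=
  (- 32 * a2^+5 * b1^+4 * b2^+4 - 64 * a2^+5 * b1^+6 * b2^+2 - 32 * a2^+5 * b1^+8 + 64 * a2^+6 * b1^+4 * b2^+3 + 32 * a2^+6 * b1^+6 * b2 - 32 * a2^+7 * b1^+4 * b2^+2 - 16 * a2^+7 * b1^+6 + 128 * a1 * a2^+4 * b1^+3 * b2^+5 + 256 * a1 * a2^+4 * b1^+5 * b2^+3 + 128 * a1 * a2^+4 * b1^+7 * b2 - 192 * a1 * a2^+5 * b1^+3 * b2^+4 + 144 * a1 * a2^+5 * b1^+5 * b2^+2 + 144 * a1 * a2^+5 * b1^+7 + 80 * a1 * a2^+6 * b1^+5 * b2 + 64 * a1 * a2^+7 * b1^+3 * b2^+2 - 160 * a1^+2 * a2^+3 * b1^+2 * b2^+6 - 288 * a1^+2 * a2^+3 * b1^+4 * b2^+4 - 96 * a1^+2 * a2^+3 * b1^+6 * b2^+2 + 32 * a1^+2 * a2^+3 * b1^+8 + 160 * a1^+2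 * a2^+4 * b1^+2 * b2^+5 - 752 * a1^+2 * a2^+4 * b1^+4 * b2^+3 - 432 * a1^+2 * a2^+4 * b1^+6 * b2 + 160 * a1^+2 * a2^+5 * b1^+2 * b2^+4 - 480 * a1^+2 * a2^+5 * b1^+4 * b2^+2 - 80 * a1^+2 * a2^+5 * b1^+6 - 160 * a1^+2 * a2^+6 * b1^+2 * b2^+3 + 32 * a1^+2 * a2^+6 * b1^+4 * b2 + 64 * a1^+3 * a2^+2 * b1 * b2^+7 + 64 * a1^+3 * a2^+2 * b1^+3 * b2^+5 - 64 * a1^+3 * a2^+2 * b1^+5 * b2^+3 - 64 * a1^+3 * a2^+2 * b1^+7 * b2 + 992 * a1^+3 * a2^+3 * b1^+3 * b2^+4 + 416 * a1^+3 * a2^+3 * b1^+5 * b2^+2 + 64 * a1^+3 * a2^+3 * b1^+7 - 192 * a1^+3 * a2^+4 * b1 * b2^+5 + 992 * a1^+3 * a2^+4 * b1^+3 * b2^+3 + 144 * a1^+3 * a2^+4 * b1^+5 * b2 + 128 * a1^+3 * a2^+5 * b1 * b2^+4 + 64 * a1^+3 * a2^+5 * b1^+3 * b2^+2 + 32 * a1^+4 * a2 * b1^+2 * b2^+6 + 64 * a1^+4 * a2 * b1^+4 * b2^+4 + 32 * a1^+4 * a2 * b1^+6 * b2^+2 - 32 * a1^+4 * a2^+2 * b2^+7 - 480 * a1^+4 * a2^+2 * b1^+2 * b2^+5 - 192 * a1^+4 * a2^+2 * b1^+4 * b2^+3 - 224 * a1^+4 * a2^+2 * b1^+6 * b2 +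 64 * a1^+4 * a2^+3 * b2^+6 - 752 * a1^+4 * a2^+3 * b1^+2 * b2^+4 - 192 * a1^+4 * a2^+3 * b1^+4 * b2^+2 - 96 * a1^+4 * a2^+3 * b1^+6 - 32 * a1^+4 * a2^+4 * b2^+5 - 288 * a1^+4 * a2^+4 * b1^+2 * b2^+3 + 64 * a1^+4 * a2^+4 * b1^+4 * b2 + 80 * a1^+5 * a2 * b1 * b2^+6 + 144 * a1^+5 * a2 * b1^+3 * b2^+4 + 256 * a1^+5 * a2 * b1^+5 * b2^+2 + 144 * a1^+5 * a2^+2 * b1 * b2^+5 + 416 * a1^+5 * a2^+2 * b1^+3 * b2^+3 + 256 * a1^+5 * a2^+2 * b1^+5 * b2 + 256 * a1^+5 * a2^+3 * b1 * b2^+4 - 64 * a1^+5 * a2^+3 * b1^+3 * b2^+2 - 16 * a1^+6 * b2^+7 - 80 * a1^+6 * b1^+2 * b2^+5 - 96 * a1^+6 * b1^+4 * b2^+3 + 32 * a1^+6 * a2 * b2^+6 - 432 * a1^+6 * a2 * b1^+2 * b2^+4 - 224 * a1^+6 * a2 * b1^+4 * b2^+2 - 64 * a1^+6 * a2^+2 * b2^+5 - 96 * a1^+6 * a2^+2 * b1^+2 * b2^+3 + 32 * a1^+6 * a2^+2 * b1^+4 * b2 + 144 * a1^+7 * b1 * b2^+5 + 64 * a1^+7 * b1^+3 * b2^+3 + 128 * a1^+7 * a2 * b1 * b2^+4 - 64 * a1^+7 * a2 * b1^+3 * b2^+2 - 32 * a1^+8 * b2^+5 + 32 * a1^+8 *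 b1^+2 * b2^+3).

Definition c203 {K : comNzRingType} (a1 a2 b1 b2 : K) : K :=
  (- 8 * a2^+6 * b1^+4 * b2^+4 - 8 * a2^+6 * b1^+6 * b2^+2 - 48 * a2^+7 * b1^+4 * b2^+3 - 40 * a2^+7 * b1^+6 * b2 - 8 * a2^+8 * b1^+4 * b2^+2 + 24 * a2^+8 * b1^+6 + 32 * a1 * a2^+5 * b1^+3 * b2^+5 + 16 * a1 * a2^+5 * b1^+5 * b2^+3 - 16 * a1 * a2^+5 * b1^+7 * b2 + 192 * a1 * a2^+6 * b1^+3 * b2^+4 + 112 * a1 * a2^+6 * b1^+5 * b2^+2 + 8 * a1 * a2^+6 * b1^+7 + 32 * a1 * a2^+7 * b1^+3 * b2^+3 - 112 * a1 * a2^+7 * b1^+5 * b2 - 48 * a1^+2 * a2^+4 * b1^+2 * b2^+6 + 40 * a1^+2 * a2^+4 * b1^+4 * b2^+4 + 104 * a1^+2 * a2^+4 * b1^+6 * b2^+2 + 16 * a1^+2 * a2^+4 * b1^+8 - 288 * a1^+2 * a2^+5 * b1^+2 * b2^+5 - 88 * a1^+2 * a2^+5 * b1^+4 * b2^+3 - 160 * a1^+2 * a2^+5 * b1^+6 * b2 - 48 * a1^+2 * a2^+6 * b1^+2 * b2^+4 + 200 * a1^+2 * a2^+6 * b1^+4 * b2^+2 + 40 * a1^+2 * a2^+6 * b1^+6 + 32 * a1^+3 * a2^+3 * b1 * b2^+7 - 160 * a1^+3 * a2^+3 * b1^+3 * b2^+5 - 256 * a1^+3 * a2^+3 * b1^+5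 * b2^+3 - 64 * a1^+3 * a2^+3 * b1^+7 * b2 + 192 * a1^+3 * a2^+4 * b1 * b2^+6 + 32 * a1^+3 * a2^+4 * b1^+3 * b2^+4 + 568 * a1^+3 * a2^+4 * b1^+5 * b2^+2 - 32 * a1^+3 * a2^+4 * b1^+7 + 32 * a1^+3 * a2^+5 * b1 * b2^+5 - 160 * a1^+3 * a2^+5 * b1^+3 * b2^+3 - 176 * a1^+3 * a2^+5 * b1^+5 * b2 - 8 * a1^+4 * a2^+2 * b2^+8 + 200 * a1^+4 * a2^+2 * b1^+2 * b2^+6 + 304 * a1^+4 * a2^+2 * b1^+4 * b2^+4 + 96 * a1^+4 * a2^+2 * b1^+6 * b2^+2 - 48 * a1^+4 * a2^+3 * b2^+7 - 88 * a1^+4 * a2^+3 * b1^+2 * b2^+5 - 832 * a1^+4 * a2^+3 * b1^+4 * b2^+3 + 128 * a1^+4 * a2^+3 * b1^+6 * b2 - 8 * a1^+4 * a2^+4 * b2^+6 + 40 * a1^+4 * a2^+4 * b1^+2 * b2^+4 + 304 * a1^+4 * a2^+4 * b1^+4 * b2^+2 + 16 * a1^+4 * a2^+4 * b1^+6 - 112 * a1^+5 * a2 * b1 * b2^+7 - 176 * a1^+5 * a2 * b1^+3 * b2^+5 - 64 * a1^+5 * a2 * b1^+5 * b2^+3 + 112 * a1^+5 * a2^+2 * b1 * b2^+6 + 568 * a1^+5 * a2^+2 * b1^+3 * b2^+4 - 192 * a1^+5 * a2^+2 * b1^+5 * b2^+2 + 16 * a1^+5 * a2^+3 * b1 * b2^+5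 - 256 * a1^+5 * a2^+3 * b1^+3 * b2^+3 - 64 * a1^+5 * a2^+3 * b1^+5 * b2 + 24 * a1^+6 * b2^+8 + 40 * a1^+6 * b1^+2 * b2^+6 + 16 * a1^+6 * b1^+4 * b2^+4 - 40 * a1^+6 * a2 * b2^+7 - 160 * a1^+6 * a2 * b1^+2 * b2^+5 + 128 * a1^+6 * a2 * b1^+4 * b2^+3 - 8 * a1^+6 * a2^+2 * b2^+6 + 104 * a1^+6 * a2^+2 * b1^+2 * b2^+4 + 96 * a1^+6 * a2^+2 * b1^+4 * b2^+2 + 8 * a1^+7 * b1 * b2^+6 - 32 * a1^+7 * b1^+3 * b2^+4 - 16 * a1^+7 * a2 * b1 * b2^+5 - 64 * a1^+7 * a2 * b1^+3 * b2^+3 + 16 * a1^+8 * b1^+2 * b2^+4).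

Definition c113 {K : comNzRingType} (a1 a2 b1 b2 : K) : K :=
  (16 * a2^+7 * b1^+5 * b2^+2 + 48 * a2^+7 * b1^+7 + 48 * a2^+8 * b1^+5 * b2 + 48 * a1 * a2^+5 * b1^+4 * b2^+4 + 96 * a1 * a2^+5 * b1^+6 * b2^+2 + 48 * a1 * a2^+5 * b1^+8 - 48 * a1 * a2^+6 * b1^+4 * b2^+3 - 208 * a1 * a2^+6 * b1^+6 * b2 - 192 * a1 * a2^+7 * b1^+4 * b2^+2 - 192 * a1^+2 * a2^+4 * b1^+3 * b2^+5 - 384 * a1^+2 * a2^+4 * b1^+5 * b2^+3 - 192 * a1^+2 * a2^+4 * b1^+7 * b2 + 32 * a1^+2 * a2^+5 * b1^+3 * b2^+4 + 336 * a1^+2 * a2^+5 * b1^+5 * b2^+2 + 16 * a1^+2 * a2^+5 * b1^+7 + 288 * a1^+2 * a2^+6 * b1^+3 * b2^+3 + 96 * a1^+2 * a2^+6 * b1^+5 * b2 + 288 * a1^+3 * a2^+3 * b1^+2 * b2^+6 + 576 * a1^+3 * a2^+3 * b1^+4 * b2^+4 + 288 * a1^+3 * a2^+3 * b1^+6 * b2^+2 + 32 * a1^+3 * a2^+4 * b1^+2 * b2^+5 - 176 * a1^+3 * a2^+4 * b1^+4 * b2^+3 - 48 * a1^+3 * a2^+4 * b1^+6 * b2 - 192 * a1^+3 * a2^+5 * b1^+2 * b2^+4 - 384 * a1^+3 * a2^+5 * b1^+4 * b2^+2 - 192 * a1^+4 * a2^+2 * b1 * b2^+7 - 384 * a1^+4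 * a2^+2 * b1^+3 * b2^+5 - 192 * a1^+4 * a2^+2 * b1^+5 * b2^+3 - 48 * a1^+4 * a2^+3 * b1 * b2^+6 - 176 * a1^+4 * a2^+3 * b1^+3 * b2^+4 + 32 * a1^+4 * a2^+3 * b1^+5 * b2^+2 + 48 * a1^+4 * a2^+4 * b1 * b2^+5 + 576 * a1^+4 * a2^+4 * b1^+3 * b2^+3 + 48 * a1^+4 * a2^+4 * b1^+5 * b2 + 48 * a1^+5 * a2 * b2^+8 + 96 * a1^+5 * a2 * b1^+2 * b2^+6 + 48 * a1^+5 * a2 * b1^+4 * b2^+4 + 16 * a1^+5 * a2^+2 * b2^+7 + 336 * a1^+5 * a2^+2 * b1^+2 * b2^+5 + 32 * a1^+5 * a2^+2 * b1^+4 * b2^+3 - 384 * a1^+5 * a2^+3 * b1^+2 * b2^+4 - 192 * a1^+5 * a2^+3 * b1^+4 * b2^+2 - 208 * a1^+6 * a2 * b1 * b2^+6 - 48 * a1^+6 * a2 * b1^+3 * b2^+4 + 96 * a1^+6 * a2^+2 * b1 * b2^+5 + 288 * a1^+6 * a2^+2 * b1^+3 * b2^+3 + 48 * a1^+7 * b2^+7 + 16 * a1^+7 * b1^+2 * b2^+5 - 192 * a1^+7 * a2 * b1^+2 * b2^+4 + 48 * a1^+8 * b1 * b2^+5).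

Definition c023 {K : comNzRingType} (a1 a2 b1 b2 : K) : K :=
  (16 * a2^+6 * b1^+4 * b2^+4 + 40 * a2^+6 * b1^+6 * b2^+2 + 24 * a2^+6 * b1^+8 - 32 * a2^+7 * b1^+4 * b2^+3 + 8 * a2^+7 * b1^+6 * b2 + 16 * a2^+8 * b1^+4 * b2^+2 - 64 * a1 * a2^+5 * b1^+3 * b2^+5 - 176 * a1 * a2^+5 * b1^+5 * b2^+3 - 112 * a1 * a2^+5 * b1^+7 * b2 + 128 * a1 * a2^+6 * b1^+3 * b2^+4 - 160 * a1 * a2^+6 * b1^+5 * b2^+2 - 40 * a1 * a2^+6 * b1^+7 - 64 * a1 * a2^+7 * b1^+3 * b2^+3 - 16 * a1 * a2^+7 * b1^+5 * b2 + 96 * a1^+2 * a2^+4 * b1^+2 * b2^+6 + 304 * a1^+2 * a2^+4 * b1^+4 * b2^+4 + 200 * a1^+2 * a2^+4 * b1^+6 * b2^+2 - 8 * a1^+2 * a2^+4 * b1^+8 - 192 * a1^+2 * a2^+5 * b1^+2 * b2^+5 + 568 * a1^+2 * a2^+5 * b1^+4 * b2^+3 + 112 * a1^+2 * a2^+5 * b1^+6 * b2 + 96 * a1^+2 * a2^+6 * b1^+2 * b2^+4 + 104 * a1^+2 * a2^+6 * b1^+4 * b2^+2 - 8 * a1^+2 * a2^+6 * b1^+6 - 64 * a1^+3 * a2^+3 * b1 * b2^+7 - 256 * a1^+3 * a2^+3 * b1^+3 * b2^+5 - 160 * a1^+3 * a2^+3 * b1^+5 * b2^+3 + 32 * a1^+3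 * a2^+3 * b1^+7 * b2 + 128 * a1^+3 * a2^+4 * b1 * b2^+6 - 832 * a1^+3 * a2^+4 * b1^+3 * b2^+4 - 88 * a1^+3 * a2^+4 * b1^+5 * b2^+2 - 48 * a1^+3 * a2^+4 * b1^+7 - 64 * a1^+3 * a2^+5 * b1 * b2^+5 - 256 * a1^+3 * a2^+5 * b1^+3 * b2^+3 + 16 * a1^+3 * a2^+5 * b1^+5 * b2 + 16 * a1^+4 * a2^+2 * b2^+8 + 104 * a1^+4 * a2^+2 * b1^+2 * b2^+6 + 40 * a1^+4 * a2^+2 * b1^+4 * b2^+4 - 48 * a1^+4 * a2^+2 * b1^+6 * b2^+2 - 32 * a1^+4 * a2^+3 * b2^+7 + 568 * a1^+4 * a2^+3 * b1^+2 * b2^+5 + 32 * a1^+4 * a2^+3 * b1^+4 * b2^+3 + 192 * a1^+4 * a2^+3 * b1^+6 * b2 + 16 * a1^+4 * a2^+4 * b2^+6 + 304 * a1^+4 * a2^+4 * b1^+2 * b2^+4 + 40 * a1^+4 * a2^+4 * b1^+4 * b2^+2 - 8 * a1^+4 * a2^+4 * b1^+6 - 16 * a1^+5 * a2 * b1 * b2^+7 + 16 * a1^+5 * a2 * b1^+3 * b2^+5 + 32 * a1^+5 * a2 * b1^+5 * b2^+3 - 160 * a1^+5 * a2^+2 * b1 * b2^+6 - 88 * a1^+5 * a2^+2 * b1^+3 * b2^+4 - 288 * a1^+5 * a2^+2 * b1^+5 * b2^+2 - 176 * a1^+5 * a2^+3 * b1 * b2^+5 - 160 * a1^+5 * a2^+3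 * b1^+3 * b2^+3 + 32 * a1^+5 * a2^+3 * b1^+5 * b2 - 8 * a1^+6 * b1^+2 * b2^+6 - 8 * a1^+6 * b1^+4 * b2^+4 + 8 * a1^+6 * a2 * b2^+7 + 112 * a1^+6 * a2 * b1^+2 * b2^+5 + 192 * a1^+6 * a2 * b1^+4 * b2^+3 + 40 * a1^+6 * a2^+2 * b2^+6 + 200 * a1^+6 * a2^+2 * b1^+2 * b2^+4 - 48 * a1^+6 * a2^+2 * b1^+4 * b2^+2 - 40 * a1^+7 * b1 * b2^+6 - 48 * a1^+7 * b1^+3 * b2^+4 - 112 * a1^+7 * a2 * b1 * b2^+5 + 32 * a1^+7 * a2 * b1^+3 * b2^+3 + 24 * a1^+8 * b2^+6 - 8 * a1^+8 * b1^+2 * b2^+4).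

Definition c104 {K : comNzRingType} (a1 a2 b1 b2 : K) : K :=
  (- 8 * a2^+8 * b1^+7 - 8 * a1 * a2^+6 * b1^+6 * b2^+2 - 8 * a1 * a2^+6 * b1^+8 + 48 * a1 * a2^+7 * b1^+6 * b2 + 48 * a1^+2 * a2^+5 * b1^+5 * b2^+3 + 48 * a1^+2 * a2^+5 * b1^+7 * b2 - 120 * a1^+2 * a2^+6 * b1^+5 * b2^+2 - 8 * a1^+2 * a2^+6 * b1^+7 - 120 * a1^+3 * a2^+4 * b1^+4 * b2^+4 - 120 * a1^+3 * a2^+4 * b1^+6 * b2^+2 + 160 * a1^+3 * a2^+5 * b1^+4 * b2^+3 + 48 * a1^+3 * a2^+5 * b1^+6 * b2 + 160 * a1^+4 * a2^+3 * b1^+3 * b2^+5 + 160 * a1^+4 * a2^+3 * b1^+5 * b2^+3 - 120 * a1^+4 * a2^+4 * b1^+3 * b2^+4 - 120 * a1^+4 * a2^+4 * b1^+5 * b2^+2 - 120 * a1^+5 * a2^+2 * b1^+2 * b2^+6 - 120 * a1^+5 * a2^+2 * b1^+4 * b2^+4 + 48 * a1^+5 * a2^+3 * b1^+2 * b2^+5 + 160 * a1^+5 * a2^+3 * b1^+4 * b2^+3 + 48 * a1^+6 * a2 * b1 * b2^+7 + 48 * a1^+6 * a2 * b1^+3 * b2^+5 - 8 * a1^+6 * a2^+2 * b1 * b2^+6 - 120 * a1^+6 * a2^+2 * b1^+3 * b2^+4 - 8 * a1^+7 * b2^+8 - 8 * a1^+7 * b1^+2 * b2^+6 + 48 * a1^+7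 * a2 * b1^+2 * b2^+5 - 8 * a1^+8 * b1 * b2^+6).

Definition c014 {K : comNzRingType} (a1 a2 b1 b2 : K) : K :=
  (- 8 * a2^+7 * b1^+6 * b2^+2 - 8 * a2^+7 * b1^+8 - 8 * a2^+8 * b1^+6 * b2 + 48 * a1 * a2^+6 * b1^+5 * b2^+3 + 48 * a1 * a2^+6 * b1^+7 * b2 + 48 * a1 * a2^+7 * b1^+5 * b2^+2 - 120 * a1^+2 * a2^+5 * b1^+4 * b2^+4 - 120 * a1^+2 * a2^+5 * b1^+6 * b2^+2 - 120 * a1^+2 * a2^+6 * b1^+4 * b2^+3 - 8 * a1^+2 * a2^+6 * b1^+6 * b2 + 160 * a1^+3 * a2^+4 * b1^+3 * b2^+5 + 160 * a1^+3 * a2^+4 * b1^+5 * b2^+3 + 160 * a1^+3 * a2^+5 * b1^+3 * b2^+4 + 48 * a1^+3 * a2^+5 * b1^+5 * b2^+2 - 120 * a1^+4 * a2^+3 * b1^+2 * b2^+6 - 120 * a1^+4 * a2^+3 * b1^+4 * b2^+4 - 120 * a1^+4 * a2^+4 * b1^+2 * b2^+5 - 120 * a1^+4 * a2^+4 * b1^+4 * b2^+3 + 48 * a1^+5 * a2^+2 * b1 * b2^+7 + 48 * a1^+5 * a2^+2 * b1^+3 * b2^+5 + 48 * a1^+5 * a2^+3 * b1 * b2^+6 + 160 * a1^+5 * a2^+3 * b1^+3 * b2^+4 - 8 * a1^+6 * a2 * b2^+8 - 8 * a1^+6 * a2 * b1^+2 * b2^+6 - 8 * a1^+6 * a2^+2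 * b2^+7 - 120 * a1^+6 * a2^+2 * b1^+2 * b2^+5 + 48 * a1^+7 * a2 * b1 * b2^+6 - 8 * a1^+8 * b2^+7).

Definition c005 {K : comNzRingType} (a1 a2 b1 b2 : K) : K :=
  (a2^+8 * b1^+8 - 8 * a1 * a2^+7 * b1^+7 * b2 + 28 * a1^+2 * a2^+6 * b1^+6 * b2^+2 - 56 * a1^+3 * a2^+5 * b1^+5 * b2^+3 + 70 * a1^+4 * a2^+4 * b1^+4 * b2^+4 - 56 * a1^+5 * a2^+3 * b1^+3 * b2^+5 + 28 * a1^+6 * a2^+2 * b1^+2 * b2^+6 - 8 * a1^+7 * a2 * b1 * b2^+7 + a1^+8 * b2^+8).

Ltac unfold_coefs := rewrite /c500 /c410 /c320 /c230 /c140 /c050 /c401 /c311 /c221 /c131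
  /c041 /c302 /c212 /c122 /c032 /c203 /c113 /c023 /c104 /c014 /c005 /=.

Section QuinticForm.
Variables (T K : comNzRingType) (f : T -> K) (a1 a2 b1 b2 : T).

Definition qform (mon : nat -> nat -> nat -> K) : K :=
  f (c500 a1 a2 b1 b2) * mon 5 0 0
  + f (c410 a1 a2 b1 b2) * mon 4 1 0
  + f (c320 a1 a2 b1 b2) * mon 3 2 0
  + f (c230 a1 a2 b1 b2) * mon 2 3 0
  + f (c140 a1 a2 b1 b2) * mon 1 4 0
  + f (c050 a1 a2 b1 b2) * mon 0 5 0
  + f (c401 a1 a2 b1 b2) * mon 4 0 1
  + f (c311 a1 a2 b1 b2) * mon 3 1 1
  + f (c221 a1 a2 b1 b2) * mon 2 2 1
  + f (c131 a1 a2 b1 b2) * mon 1 3 1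
  + f (c041 a1 a2 b1 b2) * mon 0 4 1
  + f (c302 a1 a2 b1 b2) * mon 3 0 2
  + f (c212 a1 a2 b1 b2) * mon 2 1 2
  + f (c122 a1 a2 b1 b2) * mon 1 2 2
  + f (c032 a1 a2 b1 b2) * mon 0 3 2
  + f (c203 a1 a2 b1 b2) * mon 2 0 3
  + f (c113 a1 a2 b1 b2) * mon 1 1 3
  + f (c023 a1 a2 b1 b2) * mon 0 2 3
  + f (c104 a1 a2 b1 b2) * mon 1 0 4
  + f (c014 a1 a2 b1 b2) * mon 0 1 4
  + f (c005 a1 a2 b1 b2) * mon 0 0 5.

Definition quintic (u v t : K) : K := qform (fun i j k => u ^+ i * v ^+ j * t ^+ k).

End QuinticForm.

Arguments qform {T K} f a1 a2 b1 b2 mon.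
Arguments quintic {T K} f a1 a2 b1 b2 u v t.

Lemma qform_rmorph (T K K' : comNzRingType) (f : T -> K) (g : {rmorphism K -> K'})
    a1 a2 b1 b2 mon :
  g (qform f a1 a2 b1 b2 mon) = qform (g \o f) a1 a2 b1 b2 (fun i j k => g (mon i j k)).
Proof. by rewrite /qform !rmorphD !rmorphM. Qed.

Lemma quintic_rmorph (T K K' : comNzRingType) (f : T -> K) (g : {rmorphism K -> K'})
    a1 a2 b1 b2 (u v t : K) :
  g (quintic f a1 a2 b1 b2 u v t) = quintic (g \o f) a1 a2 b1 b2 (g u) (g v) (g t).
Proof. by rewrite /quintic qform_rmorph /qform !rmorphM !rmorphXn. Qed.

Lemma quintic_coef_rmorph (T K : comNzRingType) (f : {rmorphism T -> K}) a1 a2 b1 b2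
    (u v t : K) :
  quintic f a1 a2 b1 b2 u v t = quintic idfun (f a1) (f a2) (f b1) (f b2) u v t.
Proof. by rewrite /quintic /qform; unfold_coefs; ring. Qed.

Lemma eq_qform (T K : comNzRingType) (f g : T -> K) a1 a2 b1 b2 mon mon' :
  f =1 g -> (forall i j k, mon i j k = mon' i j k) ->
  qform f a1 a2 b1 b2 mon = qform g a1 a2 b1 b2 mon'.
Proof. by move=> fg mm; rewrite /qform !fg !mm. Qed.

Lemma eq_quintic (T K : comNzRingType) (f g : T -> K) a1 a2 b1 b2 (u v t : K) :
  f =1 g -> quintic f a1 a2 b1 b2 u v t = quintic g a1 a2 b1 b2 u v t.
Proof. by move=> fg; apply: eq_qform. Qed.

Lemma mderiv_qform n (T : comNzRingType) (l : 'I_n) a1 a2 b1 b2 mon :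
  (qform (@mpolyC n T) a1 a2 b1 b2 mon)^`M(l)
  = qform (@mpolyC n T) a1 a2 b1 b2 (fun i j k => (mon i j k)^`M(l)).
Proof. by rewrite /qform !mderivD !mderiv_mulC. Qed.

Lemma quintic_homog n (T : comNzRingType) a1 a2 b1 b2 (u v t : {mpoly T[n]}) :
  u \is 1.-homog -> v \is 1.-homog -> t \is 1.-homog ->
  quintic (@mpolyC n T) a1 a2 b1 b2 u v t \is 5.-homog.
Proof.
move=> hu hv ht.
have hmon c i j k : c%:MP * (u ^+ i * v ^+ j * t ^+ k) \is (i + j + k).-homog.
  rewrite mul_mpolyC; apply: dhomogZ.
  by have := dhomogM (dhomogM (dhomogMn i hu) (dhomogMn j hv)) (dhomogMn k ht); rewrite !mul1n.
by rewrite /quintic /qform; repeat apply: rpredD; apply: hmon.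
Qed.

Definition bif_shape {K : comNzRingType} (Q A B C D : K) : K :=
  Q ^+ 4 - 8 * (Q ^+ 2 * (A + B + C)) + 64 * (Q * D)
  + 16 * (A ^+ 2 + B ^+ 2 + C ^+ 2) - 32 * (A * B + B * C + C * A).

Definition bif_expr {K : comNzRingType} (s0 s1 s2 n0 n1 n2 c01 c12 c20 W : K) : K :=
  bif_shape (n0 * s0 + n1 * s1 + n2 * s2 - W ^+ 2) (c01 ^+ 2 * (s0 * s1))
    (c12 ^+ 2 * (s1 * s2)) (c20 ^+ 2 * (s2 * s0)) (c01 * c12 * c20 * (s0 * s1 * s2)).

Lemma bif_expr_cycle (K : comNzRingType) (s0 s1 s2 n0 n1 n2 c01 c12 c20 W : K) :
  bif_expr s1 s2 s0 n1 n2 n0 c12 c20 c01 W = bif_expr s0 s1 s2 n0 n1 n2 c01 c12 c20 W.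
Proof. by rewrite /bif_expr /bif_shape; ring. Qed.

Lemma bif_expr_congr (K : comNzRingType) (s0 s1 s2 n0 n1 n2 c01 c12 c20 W
    s0' s1' s2' n0' n1' n2' c01' c12' c20' W' : K) :
  s0 = s0' -> s1 = s1' -> s2 = s2' -> n0 = n0' -> n1 = n1' -> n2 = n2' ->
  c01 = c01' -> c12 = c12' -> c20 = c20' -> W = W' ->
  bif_expr s0 s1 s2 n0 n1 n2 c01 c12 c20 W = bif_expr s0' s1' s2' n0' n1' n2' c01' c12' c20' W'.
Proof. by move=> -> -> -> -> -> -> -> -> -> ->. Qed.

Definition bif_translated {K : comNzRingType} (u v a1 a2 b1 b2 : K) : K :=
  bif_expr (u ^+ 2 + v ^+ 2) ((u - a1) ^+ 2 + (v - a2) ^+ 2) ((u - b1) ^+ 2 + (v - b2) ^+ 2)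
   ((a1 - b1) ^+ 2 + (a2 - b2) ^+ 2) (b1 ^+ 2 + b2 ^+ 2) (a1 ^+ 2 + a2 ^+ 2)
   ((a1 - b1) * b1 + (a2 - b2) * b2) (- (b1 * a1 + b2 * a2))
   (- (a1 * (a1 - b1) + a2 * (a2 - b2))) (a1 * b2 - a2 * b1).

Lemma bif_translated_quintic (K : comNzRingType) (u v a1 a2 b1 b2 : K) :
  bif_translated u v a1 a2 b1 b2 = quintic idfun a1 a2 b1 b2 u v 1.
Proof. by rewrite /bif_translated /bif_expr /bif_shape /quintic /qform; unfold_coefs; ring. Qed.

Lemma quintic_ideal (K : comNzRingType) (u v a1 a2 b1 b2 : K) :
  quintic idfun a1 a2 b1 b2 u v 0 = -64 * (a1 * b2 - a2 * b1)
    * (((a1 - b1) ^+ 2 + (a2 - b2) ^+ 2) * (b1 ^+ 2 + b2 ^+ 2) * (a1 ^+ 2 + a2 ^+ 2))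
    * (u ^+ 2 + v ^+ 2)
    * (((a1 - b1) * v - (a2 - b2) * u) * (b1 * v - b2 * u) * (a2 * u - a1 * v)).
Proof. by rewrite /quintic /qform; unfold_coefs; ring. Qed.

Definition mon_grad (x0 y0 p q : RR) (l : 'I_3) (i j k : nat) : RR :=
  let dU := (iX == l)%:R - x0 * (iU == l)%:R in
  let dV := (iY == l)%:R - y0 * (iU == l)%:R in
  let dT := (iU == l)%:R in
  i%:R * p ^+ i.-1 * dU * (q ^+ j * 0 ^+ k)
  + p ^+ i * (j%:R * q ^+ j.-1 * dV * 0 ^+ k + q ^+ j * (k%:R * 0 ^+ k.-1 * dT)).

Lemma mderiv_mon_ideal (x0 y0 p q : RR) (l : 'I_3) i j k :
  ((('X_iX - x0 *: 'X_iU) ^+ i * ('X_iY - y0 *: 'X_iU) ^+ j * 'X_iU ^+ k)^`M(l)).@[pt3 p q 0]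
  = mon_grad x0 y0 p q l i j k.
Proof.
rewrite !mderivM !mderiv_exp !mderivB !mderivZ !mderiv_mpolyX.
rewrite !(mevalM, mevalD, mevalB, mevalZ, mevalC, mevalXU, rmorphXn, rmorph_nat) /=.
rewrite ?mevalB ?mevalN ?mevalZ ?mevalXU ?mevalC /= !mulr0 !subr0 /mon_grad.
(* [ring] cannot normalize powers with symbolic exponents: make them atoms. *)
move: (p ^+ i.-1) (p ^+ i) (q ^+ j.-1) (q ^+ j) ((0 : RR) ^+ k) ((0 : RR) ^+ k.-1).
by move=> P P' Q Q' Z Z'; ring.
Qed.

Section BifurcationForm.
Variables m0 m1 m2 : RR * RR.

Local Notation a1 := (m1.1 - m0.1).
Local Notation a2 := (m1.2 - m0.2).
Local Notation b1 := (m2.1 - m0.1).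
Local Notation b2 := (m2.2 - m0.2).

Definition bif_form : {mpoly RR[3]} :=
  quintic (@mpolyC 3 RR) a1 a2 b1 b2
    ('X_iX - m0.1 *: 'X_iU) ('X_iY - m0.2 *: 'X_iU) 'X_iU.

Lemma bif_form_homog : bif_form \is 5.-homog.
Proof. by apply: quintic_homog; rewrite ?rpredB ?dhomogZ ?mpolyX_homog. Qed.

Lemma Fbif_expr : Fbif m0 m1 m2 = bif_expr (sqdist m0) (sqdist m1) (sqdist m2)
    (dot (d12 m1 m2) (d12 m1 m2))%:MP (dot (d20 m0 m2) (d20 m0 m2))%:MP
    (dot (d01 m0 m1) (d01 m0 m1))%:MP
    (dot (d12 m1 m2) (d20 m0 m2))%:MP (dot (d20 m0 m2) (d01 m0 m1))%:MP
    (dot (d01 m0 m1) (d12 m1 m2))%:MP (Wc m0 m1 m2)%:MP.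
Proof.
rewrite /Fbif /Qp /P01sq /P12sq /P20sq /Pprod /bif_expr /bif_shape -!mul_mpolyC.
by rewrite !rmorphXn !rmorphM !rmorph_nat.
Qed.

Lemma Fbif_translated : Fbif m0 m1 m2 =
  bif_translated ('X_ix - m0.1%:MP) ('X_iy - m0.2%:MP) a1%:MP a2%:MP b1%:MP b2%:MP.
Proof.
rewrite Fbif_expr /bif_translated /sqdist /Xp /Yp.
apply: bif_expr_congr;
  by rewrite /dot /d12 /d20 /d01 /Wc /cross /vsub /= ?rmorphB ?rmorphM ?rmorphN; ring.
Qed.

Lemma bif_form_dehom : bif_form \mPo dehom_tuple RR = Fbif m0 m1 m2.
Proof.
rewrite /bif_form quintic_rmorph (@eq_quintic _ _ _ (@mpolyC 2 RR)) => [|c]; last first.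
  by rewrite /= comp_mpolyC.
rewrite quintic_coef_rmorph !raddfB /= !linearZ /= !comp_mpolyXU /=.
by rewrite -bif_translated_quintic Fbif_translated !scalerN -!mul_mpolyC !mulr1 !rmorphB.
Qed.

Lemma bif_form_grad (p q : RR) (l : 'I_3) :
  (bif_form^`M(l)).@[pt3 p q 0]
  = qform idfun a1 a2 b1 b2 (mon_grad m0.1 m0.2 p q l).
Proof.
rewrite /bif_form /quintic mderiv_qform (qform_rmorph _ _ _ _ (meval (pt3 p q 0))).
by apply: eq_qform => [c|i j k] /=; [exact: mevalC | exact: mderiv_mon_ideal].
Qed.

Lemma bif_form_ideal (X Y : RR) :
  bif_form.@[pt3 X Y 0] = quintic idfun a1 a2 b1 b2 X Y 0.
Proof.
rewrite /bif_form (quintic_rmorph _ _ _ _ (meval (pt3 X Y 0))).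
rewrite (@eq_quintic _ _ _ idfun) => [|c]; last exact: mevalC.
by rewrite !rmorphB /= !mevalZ !mevalXU /= !mulr0 !subr0.
Qed.

Lemma bif_formC_ideal (X Y : RR[i]) :
  (map_mpoly (real_complex RR) bif_form).@[pt3 X Y 0]
  = quintic idfun a1%:C a2%:C b1%:C b2%:C X Y 0.
Proof.
rewrite /bif_form (quintic_rmorph _ _ _ _ (map_mpoly (real_complex RR))).
rewrite (quintic_rmorph _ _ _ _ (meval (pt3 X Y 0))).
rewrite (@eq_quintic _ _ _ (real_complex RR)) => [|c]; last first.
  by rewrite /= map_mpolyC mevalC.
rewrite quintic_coef_rmorph !rmorphB /= !map_mpolyZ !map_mpolyX.
by rewrite ?rmorphB /= !mevalZ !mevalXU /= !mulr0 !subr0.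
Qed.

End BifurcationForm.

Lemma qform_grad_side (x0 y0 a1 a2 b1 b2 p q : RR) :
  p = a1 - b1 -> q = a2 - b2 ->
  let W := a1 * b2 - a2 * b1 in
  let lam := 16 * W ^+ 3 * (p ^+ 2 + q ^+ 2)
     * (((a1 - b1) ^+ 2 + (a2 - b2) ^+ 2) * (b1 ^+ 2 + b2 ^+ 2) * (a1 ^+ 2 + a2 ^+ 2)) in
  [/\ qform idfun a1 a2 b1 b2 (mon_grad x0 y0 p q iX) = lam * (- 4 * q),
      qform idfun a1 a2 b1 b2 (mon_grad x0 y0 p q iY) = lam * (4 * p)
    & qform idfun a1 a2 b1 b2 (mon_grad x0 y0 p q iU) = lam * (4 * q * x0 - 4 * p * y0 - 3 * W)].
Proof.
move=> -> -> W lam; rewrite {}/lam {}/W /qform /mon_grad; unfold_coefs.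
by split; ring.
Qed.

Lemma cross_sqr_neq0 (T : realDomainType) (x y z w : T) :
  x * w - y * z != 0 -> x ^+ 2 + y ^+ 2 != 0.
Proof.
apply: contra; rewrite paddr_eq0 ?sqr_ge0 // !sqrf_eq0 => /andP[/eqP-> /eqP->].
by rewrite !mul0r subrr.
Qed.

Lemma mulf_eq0_5 (K : idomainType) (c x y z s t : K) : c != 0 ->
  c * x * y * z * (s * t) = 0 <-> x = 0 \/ y = 0 \/ z = 0 \/ s = 0 \/ t = 0.
Proof.
move=> c_neq0; split; last by case=> [->|[->|[->|[->|->]]]]; rewrite ?(mulr0, mul0r).
move/eqP; rewrite !mulf_eq0 (negbTE c_neq0) /=.
by case/orP => [/orP[/orP[|]|]|/orP[|]] /eqP; tauto.
Qed.

Lemma asymptote_at_grad (p : {mpoly RR[2]}) (a b lam lx ly lc : RR) (L : RR * RR -> RR) :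
  gradh p a b 0 = (lam * lx, lam * ly, lam * lc) -> lam != 0 -> (lx != 0) || (ly != 0) ->
  (forall x, L x = lx * x.1 + ly * x.2 + lc) -> asymptote_at p a b L.
Proof.
move=> grad_p lam_neq0 l_neq0 Lx; rewrite /asymptote_at grad_p /=.
have dir_neq0 : (lam * lx, lam * ly) <> (0, 0).
  case=> /eqP + /eqP; rewrite !mulf_eq0 (negbTE lam_neq0) /= => /eqP lx0 /eqP ly0.
  by move: l_neq0; rewrite lx0 ly0 eqxx.
split=> [[lx0 ly0 _]|//|x]; first by apply: dir_neq0; rewrite lx0 ly0.
rewrite Lx -!mulrA -!mulrDr; split=> [/eqP|->]; last by rewrite mulr0.
by rewrite mulf_eq0 (negbTE lam_neq0) => /eqP.
Qed.

Lemma asymptote_at_eq (p : {mpoly RR[2]}) (a b : RR) (L L' : RR * RR -> RR) :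
  L =1 L' -> asymptote_at p a b L -> asymptote_at p a b L'.
Proof. by move=> LL' [g0 g12 gL]; split=> // x; rewrite -LL'. Qed.

Lemma Wc_cycle (m0 m1 m2 : RR * RR) : Wc m1 m2 m0 = Wc m0 m1 m2.
Proof. by rewrite /Wc /cross /d10 /d20 /vsub /=; ring. Qed.

Lemma Fbif_cycle (m0 m1 m2 : RR * RR) : Fbif m1 m2 m0 = Fbif m0 m1 m2.
Proof. by rewrite !Fbif_expr Wc_cycle bif_expr_cycle. Qed.

Lemma Lline_cycle (m0 m1 m2 : RR * RR) :
  Lline m1 m2 m0 0 =1 Lline m0 m1 m2 1 /\ Lline m1 m2 m0 1 =1 Lline m0 m1 m2 2.
Proof. by split=> x; rewrite /Lline Wc_cycle. Qed.

Lemma Lline_sum (m0 m1 m2 : RR * RR) (x : RR * RR) :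
  Lline m0 m1 m2 0 x + Lline m0 m1 m2 1 x + Lline m0 m1 m2 2 x = - Wc m0 m1 m2.
Proof. by rewrite /Lline /Wc /cross /d12 /d20 /d01 /d10 /vsub /=; ring. Qed.

Section NonCollinear.
Variables m0 m1 m2 : RR * RR.
Hypothesis W_neq0 : Wc m0 m1 m2 != 0.

Local Notation a1 := (m1.1 - m0.1).
Local Notation a2 := (m1.2 - m0.2).
Local Notation b1 := (m2.1 - m0.1).
Local Notation b2 := (m2.2 - m0.2).

Lemma WcE : Wc m0 m1 m2 = a1 * b2 - a2 * b1.
Proof. by []. Qed.

Lemma sides_sqr_neq0 :
  [/\ (a1 - b1) ^+ 2 + (a2 - b2) ^+ 2 != 0, b1 ^+ 2 + b2 ^+ 2 != 0
    & a1 ^+ 2 + a2 ^+ 2 != 0].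
Proof.
split.
- apply: (@cross_sqr_neq0 _ _ _ b1 b2).
  by have -> : (a1 - b1) * b2 - (a2 - b2) * b1 = Wc m0 m1 m2 by rewrite WcE; ring.
- apply: (@cross_sqr_neq0 _ _ _ a1 a2).
  have -> : b1 * a2 - b2 * a1 = - Wc m0 m1 m2 by rewrite WcE; ring.
  by rewrite oppr_eq0.
- exact: (@cross_sqr_neq0 _ _ _ b1 b2).
Qed.

Lemma homogenize_Fbif : homogenize (Fbif m0 m1 m2) = bif_form m0 m1 m2.
Proof.
rewrite -bif_form_dehom.
(* The direction of m1 + m2 - 2 m0 is none of the five ideal points. *)
apply: (homogenize_eq _ _ _ (bif_form_homog _ _ _) (a1 + b1) (a2 + b2)).
rewrite bif_form_ideal quintic_ideal -WcE.
have [s0 s1 s2] := sides_sqr_neq0.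
have -> : (a1 - b1) * (a2 + b2) - (a2 - b2) * (a1 + b1) = 2 * Wc m0 m1 m2 by rewrite WcE; ring.
have -> : b1 * (a2 + b2) - b2 * (a1 + b1) = - Wc m0 m1 m2 by rewrite WcE; ring.
have -> : a2 * (a1 + b1) - a1 * (a2 + b2) = - Wc m0 m1 m2 by rewrite WcE; ring.
have s : (a1 + b1) ^+ 2 + (a2 + b2) ^+ 2 != 0.
  apply: (@cross_sqr_neq0 _ _ _ (b1 - a1) (b2 - a2)).
  have -> : (a1 + b1) * (b2 - a2) - (a2 + b2) * (b1 - a1) = 2 * Wc m0 m1 m2 by rewrite WcE; ring.
  by rewrite mulf_neq0 ?pnatr_eq0.
by rewrite !mulf_neq0 ?oppr_eq0 ?pnatr_eq0.
Qed.

Lemma ideal_points_Fbif (X Y : RR[i]) :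
  (homogC (Fbif m0 m1 m2)).@[pt3 X Y 0] = 0 <->
    same_dir X Y (m1.1 - m2.1)%:C (m1.2 - m2.2)%:C \/
    same_dir X Y (m2.1 - m0.1)%:C (m2.2 - m0.2)%:C \/
    same_dir X Y (m0.1 - m1.1)%:C (m0.2 - m1.2)%:C \/
    same_dir X Y 1 'i%C \/ same_dir X Y 1 (- 'i%C).
Proof.
rewrite /homogC homogenize_Fbif bif_formC_ideal quintic_ideal /same_dir.
have [s0 s1 s2] := sides_sqr_neq0.
set c := (64 * Wc m0 m1 m2 * (((a1 - b1) ^+ 2 + (a2 - b2) ^+ 2)
          * (b1 ^+ 2 + b2 ^+ 2) * (a1 ^+ 2 + a2 ^+ 2)))%:C.
have c_neq0 : c != 0 by rewrite fmorph_eq0 !mulf_neq0 ?pnatr_eq0.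
have sqrC : (X * 'i - Y * 1) * (X * - 'i - Y * 1) = X ^+ 2 + Y ^+ 2.
  have -> : (X * 'i - Y * 1) * (X * - 'i - Y * 1) = - (X ^+ 2 * 'i ^+ 2) + Y ^+ 2 by ring.
  by rewrite sqr_i mulrN1 opprK.
rewrite [LHS](_ : _ = c * (X * (m1.2 - m2.2)%:C - Y * (m1.1 - m2.1)%:C)
    * (X * (m2.2 - m0.2)%:C - Y * (m2.1 - m0.1)%:C)
    * (X * (m0.2 - m1.2)%:C - Y * (m0.1 - m1.1)%:C)
    * ((X * 'i - Y * 1) * (X * - 'i - Y * 1))); first exact: mulf_eq0_5.
by rewrite sqrC /c WcE; ring.
Qed.

Lemma asymptote_L0 :
  asymptote_at (Fbif m0 m1 m2) (m1.1 - m2.1) (m1.2 - m2.2) (Lline m0 m1 m2 0).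
Proof.
set p := m1.1 - m2.1; set q := m1.2 - m2.2.
have [hp hq] : p = a1 - b1 /\ q = a2 - b2 by split; rewrite /p /q; ring.
have [s0 s1 s2] := sides_sqr_neq0.
have [gX gY gU] := qform_grad_side m0.1 m0.2 _ _ _ _ _ _ hp hq.
apply: asymptote_at_grad.
- by rewrite /gradh homogenize_Fbif !bif_form_grad gX gY gU -WcE.
- by rewrite !mulf_neq0 ?expf_neq0 ?pnatr_eq0 // hp hq.
- rewrite !mulf_eq0 ?oppr_eq0 ?pnatr_eq0 /= -negb_and.
  by apply: contra s0 => /andP[/eqP q0 /eqP p0]; rewrite -hp -hq p0 q0 expr0n /= addr0.
- by move=> x; rewrite /Lline WcE /cross /d12 /vsub /p /q /=; ring.
Qed.

End NonCollinear.

Theorem mainTheorem3 (m0 m1 m2 : RR * RR) :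
  (* m0, m1, m2 non-collinear *)
  Wc m0 m1 m2 != 0 ->
  let F := Fbif m0 m1 m2 in
  (* ideal points of the projective closure of F = 0 (over C = R[i]) *)
  (forall X Y : RR[i], (X, Y) <> (0, 0) ->
     ((homogC F).@[pt3 X Y 0] = 0 <->
      (same_dir X Y (m1.1 - m2.1)%:C (m1.2 - m2.2)%:C \/
       same_dir X Y (m2.1 - m0.1)%:C (m2.2 - m0.2)%:C \/
       same_dir X Y (m0.1 - m1.1)%:C (m0.2 - m1.2)%:C \/
       same_dir X Y 1 'i%C \/
       same_dir X Y 1 (- 'i%C)))) /\
  (* asymptotic lines at the three real ideal points *)
  [/\ asymptote_at F (m1.1 - m2.1) (m1.2 - m2.2) (Lline m0 m1 m2 0),
      asymptote_at F (m2.1 - m0.1) (m2.2 - m0.2) (Lline m0 m1 m2 1)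
    & asymptote_at F (m0.1 - m1.1) (m0.2 - m1.2) (Lline m0 m1 m2 2)] /\
  (* L0 ∩ L1 ∩ L2 = ∅ *)
  ~ (exists x : RR * RR,
       [/\ Lline m0 m1 m2 0 x = 0, Lline m0 m1 m2 1 x = 0
         & Lline m0 m1 m2 2 x = 0]).
Proof.
move=> W_neq0 F; have W120 := W_neq0; rewrite -Wc_cycle in W120.
have W201 := W120; rewrite -Wc_cycle in W201.
have [L10 L21] := Lline_cycle m0 m1 m2; have [L20 _] := Lline_cycle m1 m2 m0.
split; [|split; [split|]].
- by move=> X Y _; apply: ideal_points_Fbif.
- exact: asymptote_L0.
- by rewrite /F -Fbif_cycle; apply: asymptote_at_eq L10 (asymptote_L0 _ _ _ W120).
- rewrite /F -Fbif_cycle -Fbif_cycle; apply: asymptote_at_eq (asymptote_L0 _ _ _ W201).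
  by move=> x; rewrite L20 L21.
- case=> x [L0x L1x L2x]; move: W_neq0.
  by rewrite -oppr_eq0 -(Lline_sum m0 m1 m2 x) L0x L1x L2x !addr0 eqxx.
Qed.
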